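(* Call a germ $f:(\mathbb{R}^2,0)\to(\mathbb{R}^3,0)$ of normal form with data $(a,b,c)$ if $$f(u,v)=\big(u^2-v^2,\ a(u^2+v^2)+b(u,v),\ c(u,v)\big),$$ $b(u,v)=u^3b_1(u)+u^2v^2b_2(u,v)+v^3b_3(v)$, $c(u,v)=u^3c_1(u)+u^2v^2c_2(u,v)+v^3c_3(v)$, with $b_1,b_3,c_1,c_3$ smooth germs of one variable, $b_2,c_2$ smooth germs of two variables, and $a>0$, $c_1(0)>0$, $c_3(0)>0$. Let $f$ and $\hat f$ be of normal form with data $(a,b,c)$ and $(\hat a,\hat b,\hat c)$ respectively (all quantities with hats defined analogously). Let $s$ be a germ of an orientation-preserving diffeomorphism of $(\mathbb{R}^2,0)$ and $A\in SO(3)$. (i) If the $3$-jets at $0$ of $A\circ f\circ s^{-1}$ and of $\hat f$ coincide, then $a=\hat a$, $b_1(0)=\hat b_1(0)$, $b_3(0)=\hat b_3(0)$, $c_1(0)=\hat c_1(0)$ and $c_3(0)=\hat c_3(0)$; equivalently the $3$-jets of $f$ and $\hat f$ at $0$ coincide. (ii) If $A\circ f\circ s^{-1}=f$ as germs, then $A$ is the identity and, for every $r\ge1$, the $r$-jet of $s$ at $0$ equals the $r$-jet of the identity map. *)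

From Stdlib Require Import Reals List.
From Coquelicot Require Import Coquelicot.
Open Scope R_scope.

(** Points of R^2 are pairs (u,v). Partial derivative in direction d
    (true = d/du, false = d/dv). *)
Definition pD (d : bool) (g : R * R -> R) : R * R -> R :=
  fun p => if d then Derive (fun x => g (x, snd p)) (fst p)
           else Derive (fun y => g (fst p, y)) (snd p).

Definition pDs (ds : list bool) (g : R * R -> R) : R * R -> R :=
  fold_right pD g ds.

Definition near0 (eps : R) (p : R * R) : Prop :=
  Rabs (fst p) < eps /\ Rabs (snd p) < eps.

Definition smooth2 (g : R * R -> R) : Prop :=
  exists eps, 0 < eps /\
    forall (ds : list bool) (p : R * R), near0 eps p ->
      ex_derive (fun x => pDs ds g (x, snd p)) (fst p) /\
      ex_derive (fun y => pDs ds g (fst p, y)) (snd p) /\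
      continuous (pDs ds g) p.

Definition smooth1 (g : R -> R) : Prop :=
  exists eps, 0 < eps /\
    forall (n : nat) (x : R), Rabs x < eps -> ex_derive (Derive_n g n) x.

Definition jet_eq (r : nat) (g h : R * R -> R) : Prop :=
  forall ds : list bool, (length ds <= r)%nat -> pDs ds g (0, 0) = pDs ds h (0, 0).

Definition germ_eq (g h : R * R -> R) : Prop :=
  exists eps, 0 < eps /\ forall p, near0 eps p -> g p = h p.

(** Maps R^2 -> R^3, given by their components indexed by 0,1,2. *)
Definition map3 := nat -> R * R -> R.

Definition jet_eq3 (r : nat) (F G : map3) : Prop :=
  forall i, (i < 3)%nat -> jet_eq r (F i) (G i).

Definition germ_eq3 (F G : map3) : Prop :=
  forall i, (i < 3)%nat -> germ_eq (F i) (G i).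

(** 3x3 real matrices, entries indexed by 0,1,2. *)
Definition mat3 := nat -> nat -> R.

Definition mact (A : mat3) (F : map3) : map3 :=
  fun i p => A i 0%nat * F 0%nat p + A i 1%nat * F 1%nat p + A i 2%nat * F 2%nat p.

Definition det3 (A : mat3) : R :=
  A 0%nat 0%nat * (A 1%nat 1%nat * A 2%nat 2%nat - A 1%nat 2%nat * A 2%nat 1%nat)
  - A 0%nat 1%nat * (A 1%nat 0%nat * A 2%nat 2%nat - A 1%nat 2%nat * A 2%nat 0%nat)
  + A 0%nat 2%nat * (A 1%nat 0%nat * A 2%nat 1%nat - A 1%nat 1%nat * A 2%nat 0%nat).

Definition kron (i j : nat) : R := if Nat.eqb i j then 1 else 0.

Definition SO3 (A : mat3) : Prop :=
  (forall i j, (i < 3)%nat -> (j < 3)%nat ->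
     A 0%nat i * A 0%nat j + A 1%nat i * A 1%nat j + A 2%nat i * A 2%nat j = kron i j)
  /\ det3 A = 1.

Definition is_id3 (A : mat3) : Prop :=
  forall i j, (i < 3)%nat -> (j < 3)%nat -> A i j = kron i j.

Definition comp3 (F : map3) (t : R * R -> R * R) : map3 := fun i p => F i (t p).

Definition nf (a : R) (b1 : R -> R) (b2 : R * R -> R) (b3 : R -> R)
  (c1 : R -> R) (c2 : R * R -> R) (c3 : R -> R) : map3 :=
  fun i p =>
    let u := fst p in let v := snd p in
    match i with
    | 0%nat => u ^ 2 - v ^ 2
    | 1%nat => a * (u ^ 2 + v ^ 2)
               + (u ^ 3 * b1 u + u ^ 2 * v ^ 2 * b2 p + v ^ 3 * b3 v)
    | _ => u ^ 3 * c1 u + u ^ 2 * v ^ 2 * c2 p + v ^ 3 * c3 v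
    end.

Definition nf_data (a : R) (b1 : R -> R) (b2 : R * R -> R) (b3 : R -> R)
  (c1 : R -> R) (c2 : R * R -> R) (c3 : R -> R) : Prop :=
  smooth1 b1 /\ smooth1 b3 /\ smooth1 c1 /\ smooth1 c3 /\
  smooth2 b2 /\ smooth2 c2 /\
  0 < a /\ 0 < c1 0 /\ 0 < c3 0.

Definition diffeo_germ (s t : R * R -> R * R) : Prop :=
  s (0, 0) = (0, 0) /\
  smooth2 (fun p => fst (s p)) /\ smooth2 (fun p => snd (s p)) /\
  smooth2 (fun p => fst (t p)) /\ smooth2 (fun p => snd (t p)) /\
  exists eps, 0 < eps /\ forall p, near0 eps p -> t (s p) = p /\ s (t p) = p.

Definition orientation_preserving (s : R * R -> R * R) : Prop :=
  let s1 := fun p => fst (s p) in let s2 := fun p => snd (s p) in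
  pD true s1 (0, 0) * pD false s2 (0, 0) - pD false s1 (0, 0) * pD true s2 (0, 0) > 0.

(* Write [t] for the inverse of [s].  Every component of [A o f o t] is compared with
   the corresponding component of [f^] through the partial derivatives of the
   difference at the origin, i.e. through the order to which it vanishes there.

   Since [t] agrees to second order with its linear part [L], the quadratic terms
   say that composition with [L] maps the diagonal forms [x u^2 + y v^2] (spanned
   by [u^2 - v^2] and [u^2 + v^2]) to diagonal forms; with [A^T A = I] and
   [det L > 0] this leaves [a = a^], [A] fixing the third axis, and either
   [A = I] and [L = +-I], or [L] anti-diagonal and [A = diag(-1, 1, -1)].  In the
   cubic terms of the third component, the signs of [c1(0), c3(0), c1^(0), c3^(0)]
   exclude the anti-diagonal case and force [L = I], and then give
   [c1(0) = c1^(0)], [c3(0) = c3^(0)].  Writing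
   [t = id + (e1, e2)], the first two components yield [u e1 - v e2] and
   [2a (u e1 + v e2) + (b1(0) - b1^(0)) u^3 + (b3(0) - b3^(0)) v^3] flat to order 4,
   whence the [b]-coefficients.

   For (ii), [f^ = f] turns the same two components into the statement that
   [u e1] and [v e2] vanish to one order more than [e1] and [e2]; dividing by [u]
   and [v] shows by induction that [t - id], hence [s - id], vanishes to every
   order. *)

From Stdlib Require Import Reals List Lra Lia Psatz Permutation FunctionalExtensionality.
From Coquelicot Require Import Coquelicot.
Open Scope R_scope.

(** * Smoothness on boxes around the origin *)

Lemma ball_Rabs (x y r : R) : ball x r y -> Rabs (y - x) < r.
Proof. easy. Qed.

Lemma Rabs_ball (x y r : R) : Rabs (y - x) < r -> ball x r y.
Proof. easy. Qed.

Lemma Rabs_lt_shift x y r : Rabs (y - x) < r - Rabs x -> Rabs y < r.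
Proof.
  intros H. pose proof (Rabs_triang (y - x) x) as T.
  replace (y - x + x) with y in T by ring. lra.
Qed.

Lemma near0_origin e : 0 < e -> near0 e (0, 0).
Proof. intros He. split; simpl; rewrite Rabs_R0; exact He. Qed.

Lemma near0_le e e' p : e <= e' -> near0 e p -> near0 e' p.
Proof. intros H [H1 H2]; split; lra. Qed.

Lemma near0_locally_fst e p : near0 e p -> locally (fst p) (fun x => near0 e (x, snd p)).
Proof.
  intros [H1 H2]. assert (Hr : 0 < e - Rabs (fst p)) by lra.
  exists (mkposreal _ Hr). intros y Hy. apply ball_Rabs in Hy.
  split; simpl; [eapply Rabs_lt_shift; exact Hy | exact H2].
Qed.

Lemma near0_locally_snd e p : near0 e p -> locally (snd p) (fun y => near0 e (fst p, y)).
Proof.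
  intros [H1 H2]. assert (Hr : 0 < e - Rabs (snd p)) by lra.
  exists (mkposreal _ Hr). intros y Hy. apply ball_Rabs in Hy.
  split; simpl; [exact H1 | eapply Rabs_lt_shift; exact Hy].
Qed.

Lemma near0_locally_2d e x y : near0 e (x, y) -> locally_2d (fun u v => near0 e (u, v)) x y.
Proof.
  intros [H1 H2]; simpl in *.
  assert (Hr : 0 < Rmin (e - Rabs x) (e - Rabs y)) by (apply Rmin_pos; lra).
  exists (mkposreal _ Hr). intros u v Hu Hv; simpl in *.
  pose proof (Rmin_l (e - Rabs x) (e - Rabs y)). pose proof (Rmin_r (e - Rabs x) (e - Rabs y)).
  split; simpl; [apply Rabs_lt_shift with (x := x) | apply Rabs_lt_shift with (x := y)]; lra.
Qed.

Lemma near0_locally e p : near0 e p -> locally p (near0 e).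
Proof.
  destruct p as [x y]. intros Hp.
  apply (locally_2d_locally (fun u v => near0 e (u, v))), (near0_locally_2d e x y Hp).
Qed.

Definition eq_near0 (e : R) (g h : R * R -> R) : Prop :=
  forall p, near0 e p -> g p = h p.

Definition smooth_on (e : R) (g : R * R -> R) : Prop :=
  forall (ds : list bool) (p : R * R), near0 e p ->
    ex_derive (fun x => pDs ds g (x, snd p)) (fst p) /\
    ex_derive (fun y => pDs ds g (fst p, y)) (snd p) /\
    continuous (pDs ds g) p.

Definition ex_partials (g : R * R -> R) (p : R * R) : Prop :=
  ex_derive (fun x => g (x, snd p)) (fst p) /\ ex_derive (fun y => g (fst p, y)) (snd p).

Fixpoint Cn_on (e : R) (n : nat) (g : R * R -> R) : Prop :=
  (forall p, near0 e p -> continuous g p) /\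
  match n with
  | O => True
  | S m => (forall p, near0 e p -> ex_partials g p) /\
           Cn_on e m (pD true g) /\ Cn_on e m (pD false g)
  end.

Lemma pDs_app l1 l2 g : pDs (l1 ++ l2) g = pDs l1 (pDs l2 g).
Proof. apply fold_right_app. Qed.

Lemma pDs_rcons ds d g : pDs (ds ++ d :: nil) g = pDs ds (pD d g).
Proof. apply pDs_app. Qed.

Section Box.

Variable e : R.

Lemma pD_eq_near0 d g h : eq_near0 e g h -> eq_near0 e (pD d g) (pD d h).
Proof.
  intros H p Hp. unfold pD. destruct d; apply Derive_ext_loc.
  - generalize (near0_locally_fst e p Hp). apply filter_imp. intros x Hx. apply H, Hx.
  - generalize (near0_locally_snd e p Hp). apply filter_imp. intros x Hx. apply H, Hx.
Qed.

Lemma pDs_eq_near0 ds g h : eq_near0 e g h -> eq_near0 e (pDs ds g) (pDs ds h).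
Proof. induction ds; simpl; intros H; auto. apply pD_eq_near0; auto. Qed.

Lemma continuous_eq_near0 g h p : eq_near0 e g h -> near0 e p -> continuous g p -> continuous h p.
Proof.
  intros H Hp Hc. apply continuous_ext_loc with g; auto.
  generalize (near0_locally e p Hp). apply filter_imp. intros q Hq. auto.
Qed.

Lemma smooth_on_pD d g : smooth_on e g -> smooth_on e (pD d g).
Proof. intros H ds p Hp. rewrite <- pDs_rcons. apply H; auto. Qed.

Lemma smooth_on_pDs ds g : smooth_on e g -> smooth_on e (pDs ds g).
Proof. induction ds; simpl; auto. intros. apply smooth_on_pD; auto. Qed.

Lemma smooth_on_ex_partials g p : smooth_on e g -> near0 e p -> ex_partials g p.
Proof. intros H Hp. destruct (H nil p Hp) as [A [B _]]. split; auto. Qed.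

Lemma Cn_on_continuous n g : Cn_on e n g -> forall p, near0 e p -> continuous g p.
Proof. intros H; destruct n; apply H. Qed.

Lemma Cn_on_ex_partials n g : Cn_on e (S n) g -> forall p, near0 e p -> ex_partials g p.
Proof. intros [_ [H _]]. auto. Qed.

Lemma Cn_on_pD n d g : Cn_on e (S n) g -> Cn_on e n (pD d g).
Proof. intros [_ [_ [H1 H2]]]. destruct d; auto. Qed.

Lemma Cn_on_S_intro n g : (forall p, near0 e p -> continuous g p) ->
  (forall p, near0 e p -> ex_partials g p) ->
  (forall d, Cn_on e n (pD d g)) -> Cn_on e (S n) g.
Proof. intros H1 H2 H3. exact (conj H1 (conj H2 (conj (H3 true) (H3 false)))). Qed.

Lemma Cn_on_weaken n g : Cn_on e (S n) g -> Cn_on e n g.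
Proof.
  revert g; induction n; intros g H.
  - split; [apply H | exact I].
  - destruct H as [Hc [Hd [H1 H2]]]. exact (conj Hc (conj Hd (conj (IHn _ H1) (IHn _ H2)))).
Qed.

Lemma Cn_on_le n m g : Cn_on e n g -> (m <= n)%nat -> Cn_on e m g.
Proof. intros H Hle. induction Hle; auto. apply IHHle, Cn_on_weaken, H. Qed.

Lemma Cn_on_pDs ds : forall k g, Cn_on e (length ds + k) g -> Cn_on e k (pDs ds g).
Proof.
  induction ds as [|d ds IH]; intros k g H; [exact H|].
  replace (length (d :: ds) + k)%nat with (length ds + S k)%nat in H by (simpl; lia).
  apply (Cn_on_pD k d), IH, H.
Qed.

Lemma smooth_on_Cn_on g : smooth_on e g -> forall n, Cn_on e n g.
Proof.
  intros H n; revert g H; induction n; intros g H.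
  - split; [intros p Hp; apply (H nil p Hp) | exact I].
  - apply Cn_on_S_intro.
    + intros p Hp; apply (H nil p Hp).
    + intros p Hp; apply (smooth_on_ex_partials g p H Hp).
    + intros d; apply IHn, smooth_on_pD, H.
Qed.

Lemma Cn_on_smooth_on g : (forall n, Cn_on e n g) -> smooth_on e g.
Proof.
  intros H ds p Hp. destruct (Cn_on_pDs ds 1 g (H _)) as [Hc [Hd _]].
  destruct (Hd p Hp). auto.
Qed.

Lemma Cn_on_eq_near0 n : forall g h, eq_near0 e g h -> Cn_on e n g -> Cn_on e n h.
Proof.
  induction n; intros g h Hgh H.
  - split; [|exact I]. intros p Hp. eapply continuous_eq_near0; eauto. apply H; auto.
  - destruct H as [Hc [Hd [H1 H2]]]. apply Cn_on_S_intro.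
    + intros p Hp. eapply continuous_eq_near0; eauto.
    + intros p Hp. destruct (Hd p Hp) as [Hx Hy]. split.
      * eapply ex_derive_ext_loc; [|apply Hx].
        generalize (near0_locally_fst e p Hp). apply filter_imp. intros x Hx'. apply Hgh; auto.
      * eapply ex_derive_ext_loc; [|apply Hy].
        generalize (near0_locally_snd e p Hp). apply filter_imp. intros x Hx'. apply Hgh; auto.
    + intros [|]; eapply IHn; [| apply H1 | | apply H2]; apply pD_eq_near0; auto.
Qed.

Lemma smooth_on_eq_near0 g h : eq_near0 e g h -> smooth_on e g -> smooth_on e h.
Proof.
  intros Hgh Hg. apply Cn_on_smooth_on. intros n.
  apply (Cn_on_eq_near0 n g); auto. apply smooth_on_Cn_on, Hg.
Qed.

End Box.

Lemma smooth_on_le e e' g : e' <= e -> smooth_on e g -> smooth_on e' g.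
Proof. intros He H ds p Hp. apply H. eapply near0_le; eauto. Qed.

(** * Partial derivatives of sums, products and compositions *)

Lemma pD_const d c : pD d (fun _ => c) = fun _ => 0.
Proof. apply functional_extensionality; intros p; unfold pD; destruct d; apply Derive_const. Qed.

Lemma pD_fst_true : pD true fst = fun _ => 1.
Proof. apply functional_extensionality; intros p; unfold pD; simpl; apply Derive_id. Qed.
Lemma pD_fst_false : pD false fst = fun _ => 0.
Proof. apply functional_extensionality; intros p; unfold pD; simpl; apply Derive_const. Qed.
Lemma pD_snd_true : pD true snd = fun _ => 0.
Proof. apply functional_extensionality; intros p; unfold pD; simpl; apply Derive_const. Qed.
Lemma pD_snd_false : pD false snd = fun _ => 1.
Proof. apply functional_extensionality; intros p; unfold pD; simpl; apply Derive_id. Qed.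

Lemma pD_scal d c g : pD d (fun p => c * g p) = fun p => c * pD d g p.
Proof. apply functional_extensionality; intros p; unfold pD; destruct d; apply Derive_scal. Qed.

Lemma pD_plus d g h p : ex_partials g p -> ex_partials h p ->
  pD d (fun q => g q + h q) p = pD d g p + pD d h p.
Proof.
  intros [Hg1 Hg2] [Hh1 Hh2]. unfold pD; destruct d.
  - apply (Derive_plus (fun x => g (x, snd p)) (fun x => h (x, snd p))); auto.
  - apply (Derive_plus (fun x => g (fst p, x)) (fun x => h (fst p, x))); auto.
Qed.

Lemma pD_mult d g h p : ex_partials g p -> ex_partials h p ->
  pD d (fun q => g q * h q) p = pD d g p * h p + g p * pD d h p.
Proof.
  intros [Hg1 Hg2] [Hh1 Hh2]. destruct p as [x y]; unfold pD; destruct d.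
  - apply (Derive_mult (fun x => g (x, y)) (fun x => h (x, y))); auto.
  - apply (Derive_mult (fun y => g (x, y)) (fun y => h (x, y))); auto.
Qed.

Lemma ex_partials_plus g h p : ex_partials g p -> ex_partials h p ->
  ex_partials (fun q => g q + h q) p.
Proof.
  intros [] []; split;
    [apply (ex_derive_plus (fun x => g (x, snd p)) (fun x => h (x, snd p)))
    |apply (ex_derive_plus (fun y => g (fst p, y)) (fun y => h (fst p, y)))]; assumption.
Qed.

Lemma ex_partials_mult g h p : ex_partials g p -> ex_partials h p ->
  ex_partials (fun q => g q * h q) p.
Proof.
  intros [] []; split;
    [apply (ex_derive_mult (fun x => g (x, snd p)) (fun x => h (x, snd p)))
    |apply (ex_derive_mult (fun y => g (fst p, y)) (fun y => h (fst p, y)))]; assumption.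
Qed.

Section BoxAlgebra.

Variable e : R.

Lemma Cn_on_const n c : Cn_on e n (fun _ => c).
Proof.
  revert c; induction n; intros c.
  - split; [intros; apply continuous_const | exact I].
  - apply Cn_on_S_intro.
    + intros; apply continuous_const.
    + intros; split; apply ex_derive_const.
    + intros d. rewrite pD_const. apply IHn.
Qed.

Lemma Cn_on_fst n : Cn_on e n fst.
Proof.
  destruct n.
  - split; [intros [x y] _; apply continuous_fst | exact I].
  - apply Cn_on_S_intro.
    + intros [x y] _; apply continuous_fst.
    + intros p _; split; simpl; [apply ex_derive_id | apply ex_derive_const].
    + intros [|]; [rewrite pD_fst_true | rewrite pD_fst_false]; apply Cn_on_const.
Qed.

Lemma Cn_on_snd n : Cn_on e n snd.
Proof.
  destruct n.
  - split; [intros [x y] _; apply continuous_snd | exact I].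
  - apply Cn_on_S_intro.
    + intros [x y] _; apply continuous_snd.
    + intros p _; split; simpl; [apply ex_derive_const | apply ex_derive_id].
    + intros [|]; [rewrite pD_snd_true | rewrite pD_snd_false]; apply Cn_on_const.
Qed.

Lemma Cn_on_plus n : forall g h, Cn_on e n g -> Cn_on e n h -> Cn_on e n (fun p => g p + h p).
Proof.
  assert (C : forall m g h, Cn_on e m g -> Cn_on e m h ->
            forall p, near0 e p -> continuous (fun p => g p + h p) p).
  { intros m g h Hg Hh p Hp.
    apply (continuous_plus g h); [apply (Cn_on_continuous e m g) | apply (Cn_on_continuous e m h)]; auto. }
  induction n; intros g h Hg Hh.
  - split; [apply (C 0%nat) | exact I]; auto.
  - apply Cn_on_S_intro.
    + apply (C (S n)); auto.
    + intros p Hp. apply ex_partials_plus; [apply (Cn_on_ex_partials e n g) | apply (Cn_on_ex_partials e n h)]; auto.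
    + intros d. apply Cn_on_eq_near0 with (fun p => pD d g p + pD d h p).
      * intros p Hp. symmetry. apply pD_plus; [apply (Cn_on_ex_partials e n g) | apply (Cn_on_ex_partials e n h)]; auto.
      * apply IHn; apply Cn_on_pD; auto.
Qed.

Lemma Cn_on_mult n : forall g h, Cn_on e n g -> Cn_on e n h -> Cn_on e n (fun p => g p * h p).
Proof.
  assert (C : forall m g h, Cn_on e m g -> Cn_on e m h ->
            forall p, near0 e p -> continuous (fun p => g p * h p) p).
  { intros m g h Hg Hh p Hp.
    apply (continuous_mult g h); [apply (Cn_on_continuous e m g) | apply (Cn_on_continuous e m h)]; auto. }
  induction n; intros g h Hg Hh.
  - split; [apply (C 0%nat) | exact I]; auto.
  - apply Cn_on_S_intro.
    + apply (C (S n)); auto.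
    + intros p Hp. apply ex_partials_mult; [apply (Cn_on_ex_partials e n g) | apply (Cn_on_ex_partials e n h)]; auto.
    + intros d. apply Cn_on_eq_near0 with (fun p => pD d g p * h p + g p * pD d h p).
      * intros p Hp. symmetry. apply pD_mult; [apply (Cn_on_ex_partials e n g) | apply (Cn_on_ex_partials e n h)]; auto.
      * apply Cn_on_plus; apply IHn;
          solve [apply Cn_on_pD; assumption | apply Cn_on_weaken; assumption].
Qed.

Lemma smooth_on_const c : smooth_on e (fun _ => c).
Proof. apply Cn_on_smooth_on; intros; apply Cn_on_const. Qed.
Lemma smooth_on_fst : smooth_on e fst.
Proof. apply Cn_on_smooth_on; intros; apply Cn_on_fst. Qed.
Lemma smooth_on_snd : smooth_on e snd.
Proof. apply Cn_on_smooth_on; intros; apply Cn_on_snd. Qed.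

Lemma smooth_on_plus g h : smooth_on e g -> smooth_on e h -> smooth_on e (fun p => g p + h p).
Proof. intros; apply Cn_on_smooth_on; intros; apply Cn_on_plus; apply smooth_on_Cn_on; auto. Qed.

Lemma smooth_on_mult g h : smooth_on e g -> smooth_on e h -> smooth_on e (fun p => g p * h p).
Proof. intros; apply Cn_on_smooth_on; intros; apply Cn_on_mult; apply smooth_on_Cn_on; auto. Qed.

Lemma smooth_on_scal c g : smooth_on e g -> smooth_on e (fun p => c * g p).
Proof. intros H. apply smooth_on_mult; [apply smooth_on_const | exact H]. Qed.

Lemma smooth_on_opp g : smooth_on e g -> smooth_on e (fun p => - g p).
Proof.
  intros H. apply smooth_on_eq_near0 with (fun p => -1 * g p).
  - intros p _; ring.
  - apply smooth_on_scal, H.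
Qed.

Lemma smooth_on_minus g h : smooth_on e g -> smooth_on e h -> smooth_on e (fun p => g p - h p).
Proof. intros Hg Hh. apply smooth_on_plus; [exact Hg | apply smooth_on_opp, Hh]. Qed.

Lemma smooth_on_pow g n : smooth_on e g -> smooth_on e (fun p => g p ^ n).
Proof.
  intros H; induction n.
  - exact (smooth_on_const 1).
  - exact (smooth_on_mult g (fun p => g p ^ n) H IHn).
Qed.

End BoxAlgebra.

Ltac smooth := repeat match goal with
  | |- smooth_on _ _ => assumption
  | |- smooth_on _ (fun x => @?A x + @?B x) => apply (smooth_on_plus _ A B)
  | |- smooth_on _ (fun x => @?A x - @?B x) => apply (smooth_on_minus _ A B)
  | |- smooth_on _ (fun x => @?A x * @?B x) => apply (smooth_on_mult _ A B)
  | |- smooth_on _ (fun x => @?A x ^ ?n) => apply (smooth_on_pow _ A n)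
  | |- smooth_on _ (fun _ => ?c) => apply smooth_on_const
  | |- smooth_on _ (fun x => fst x) => apply smooth_on_fst
  | |- smooth_on _ (fun x => snd x) => apply smooth_on_snd
  | |- smooth_on _ fst => apply smooth_on_fst
  | |- smooth_on _ snd => apply smooth_on_snd
  end.

Definition tfst (t : R * R -> R * R) : R * R -> R := fun q => fst (t q).
Definition tsnd (t : R * R -> R * R) : R * R -> R := fun q => snd (t q).

Definition maps_into (d e : R) (t : R * R -> R * R) : Prop :=
  forall q, near0 d q -> near0 e (t q).

Lemma maps_into_pos d e t : 0 < d -> maps_into d e t -> 0 < e.
Proof.
  intros Hd Ht. destruct (Ht (0, 0) (near0_origin d Hd)) as [H _].
  pose proof (Rabs_pos (fst (t (0, 0)))). lra.
Qed.

Lemma maps_into_id d e : d <= e -> maps_into d e (fun q => q).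
Proof. intros H q Hq. apply (near0_le d); auto. Qed.

Lemma continuous_uncurry (g : R * R -> R) x y : continuous g (x, y) ->
  continuous (fun z : R * R => g (fst z, snd z)) (x, y).
Proof. intros H. apply continuous_ext with g; auto. intros [a b]; reflexivity. Qed.

Lemma Cn_on_differentiable e g q : Cn_on e 2 g -> near0 e q ->
  differentiable_pt_lim (fun u v => g (u, v)) (fst q) (snd q) (pD true g q) (pD false g q).
Proof.
  intros H Hq. destruct q as [x y].
  apply filterdiff_differentiable_pt_lim.
  apply (is_derive_filterdiff (fun u v => g (u, v)) x y (fun u v => pD true g (u, v))).
  - generalize (near0_locally e _ Hq). apply filter_imp. intros [u v] Huv.
    apply Derive_correct, (Cn_on_ex_partials e 1 g H (u, v) Huv).
  - apply Derive_correct, (Cn_on_ex_partials e 1 g H (x, y) Hq).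
  - apply continuous_uncurry, (Cn_on_continuous e 1 (pD true g) (Cn_on_pD e 1 true g H) (x, y) Hq).
Qed.

Section ChainRule.

Variables (d e : R) (t : R * R -> R * R).
Hypothesis (Ht : maps_into d e t).

Lemma is_derive_comp g p (b : bool) : Cn_on e 2 g -> near0 d p ->
  ex_partials (tfst t) p -> ex_partials (tsnd t) p ->
  is_derive (fun x => g (t (if b then (x, snd p) else (fst p, x)))) (if b then fst p else snd p)
    (pD true g (t p) * pD b (tfst t) p + pD false g (t p) * pD b (tsnd t) p).
Proof.
  intros Hg Hp [E1 E3] [E2 E4].
  pose proof (Cn_on_differentiable e g (t p) Hg (Ht p Hp)) as Hd.
  destruct p as [x0 y0]; simpl in *.
  apply Derive_correct, is_derive_Reals in E1. apply Derive_correct, is_derive_Reals in E2.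
  apply Derive_correct, is_derive_Reals in E3. apply Derive_correct, is_derive_Reals in E4.
  destruct b.
  - apply is_derive_ext with (fun x => (fun u v => g (u, v)) (tfst t (x, y0)) (tsnd t (x, y0))).
    { intros x. unfold tfst, tsnd. rewrite <- surjective_pairing; reflexivity. }
    apply is_derive_Reals.
    exact (derivable_pt_lim_comp_2d (fun u v => g (u, v)) (fun x => tfst t (x, y0))
             (fun x => tsnd t (x, y0)) x0 _ _ _ _ Hd E1 E2).
  - apply is_derive_ext with (fun y => (fun u v => g (u, v)) (tfst t (x0, y)) (tsnd t (x0, y))).
    { intros y. unfold tfst, tsnd. rewrite <- surjective_pairing; reflexivity. }
    apply is_derive_Reals.
    exact (derivable_pt_lim_comp_2d (fun u v => g (u, v)) (fun y => tfst t (x0, y))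
             (fun y => tsnd t (x0, y)) y0 _ _ _ _ Hd E3 E4).
Qed.

Lemma ex_partials_comp g p : Cn_on e 2 g -> near0 d p ->
  ex_partials (tfst t) p -> ex_partials (tsnd t) p -> ex_partials (fun q => g (t q)) p.
Proof.
  intros Hg Hp H1 H2. split.
  - eexists. exact (is_derive_comp g p true Hg Hp H1 H2).
  - eexists. exact (is_derive_comp g p false Hg Hp H1 H2).
Qed.

Lemma pD_comp_Cn g p (b : bool) : Cn_on e 2 g -> near0 d p ->
  ex_partials (tfst t) p -> ex_partials (tsnd t) p ->
  pD b (fun q => g (t q)) p = pD true g (t p) * pD b (tfst t) p + pD false g (t p) * pD b (tsnd t) p.
Proof.
  intros Hg Hp H1 H2. rewrite <- (is_derive_unique _ _ _ (is_derive_comp g p b Hg Hp H1 H2)).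
  destruct b; reflexivity.
Qed.

Lemma continuous_comp_near0 (g : R * R -> R) p : (forall q, near0 e q -> continuous g q) -> near0 d p ->
  continuous (tfst t) p -> continuous (tsnd t) p -> continuous (fun q => g (t q)) p.
Proof.
  intros Hg Hp C1 C2.
  apply continuous_ext with (fun q => (fun a b => g (a, b)) (tfst t q) (tsnd t q)).
  { intros q. unfold tfst, tsnd. rewrite <- surjective_pairing; reflexivity. }
  apply (continuous_comp_2 (tfst t) (tsnd t) (fun a b => g (a, b))); auto.
  unfold tfst, tsnd. pose proof (Hg (t p) (Ht p Hp)) as K. destruct (t p) as [a b].
  apply continuous_uncurry, K.
Qed.

Lemma Cn_on_comp n : forall g, Cn_on e (n + 2) g -> Cn_on d n (tfst t) -> Cn_on d n (tsnd t) ->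
  Cn_on d n (fun q => g (t q)).
Proof.
  assert (C : forall m k g, Cn_on e m g -> Cn_on d k (tfst t) -> Cn_on d k (tsnd t) ->
            forall p, near0 d p -> continuous (fun q => g (t q)) p).
  { intros m k g Hg H1 H2 p Hp. apply continuous_comp_near0; auto;
      [apply (Cn_on_continuous e m) | apply (Cn_on_continuous d k) | apply (Cn_on_continuous d k)]; auto. }
  induction n as [|n IHn]; intros g Hg H1 H2.
  - split; [apply (C 2%nat 0%nat) | exact I]; auto.
  - assert (Hg2 : Cn_on e 2 g) by (apply (Cn_on_le e (S n + 2)%nat); [exact Hg | lia]).
    assert (H1' : Cn_on d 1 (tfst t)) by (apply (Cn_on_le d (S n)); [exact H1 | lia]).
    assert (H2' : Cn_on d 1 (tsnd t)) by (apply (Cn_on_le d (S n)); [exact H2 | lia]).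
    assert (P1 := Cn_on_ex_partials d 0 _ H1'). assert (P2 := Cn_on_ex_partials d 0 _ H2').
    apply Cn_on_S_intro.
    + apply (C (S n + 2)%nat (S n)); auto.
    + intros p Hp. apply ex_partials_comp; auto.
    + intros b. apply Cn_on_eq_near0 with
        (fun q => pD true g (t q) * pD b (tfst t) q + pD false g (t q) * pD b (tsnd t) q).
      { intros q Hq. symmetry. apply pD_comp_Cn; auto. }
      apply Cn_on_plus; apply Cn_on_mult; try (apply Cn_on_pD; assumption);
        (apply IHn; [apply (Cn_on_pD e (n + 2)); exact Hg | apply Cn_on_weaken, H1 | apply Cn_on_weaken, H2]).
Qed.

Lemma smooth_on_comp g : smooth_on e g -> smooth_on d (tfst t) -> smooth_on d (tsnd t) ->
  smooth_on d (fun q => g (t q)).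
Proof.
  intros Hg H1 H2. apply Cn_on_smooth_on. intros n.
  apply Cn_on_comp; apply smooth_on_Cn_on; auto.
Qed.

Lemma pD_comp g p (b : bool) : smooth_on e g -> near0 d p ->
  smooth_on d (tfst t) -> smooth_on d (tsnd t) ->
  pD b (fun q => g (t q)) p = pD true g (t p) * pD b (tfst t) p + pD false g (t p) * pD b (tsnd t) p.
Proof.
  intros Hg Hp H1 H2. apply pD_comp_Cn; auto.
  - apply smooth_on_Cn_on, Hg.
  - apply (smooth_on_ex_partials d), Hp; exact H1.
  - apply (smooth_on_ex_partials d), Hp; exact H2.
Qed.

End ChainRule.

Lemma pDs_fun_fst (phi : R -> R) ds :
  pDs ds (fun p => phi (fst p)) =
  if forallb (fun b => b) ds then (fun p => Derive_n phi (length ds) (fst p)) else (fun _ => 0).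
Proof.
  induction ds as [|b ds IH]; simpl; auto.
  rewrite IH. destruct b, (forallb (fun b => b) ds); simpl; try apply pD_const;
    apply functional_extensionality; intros p; unfold pD; simpl; [reflexivity | apply Derive_const].
Qed.

Lemma pDs_fun_snd (phi : R -> R) ds :
  pDs ds (fun p => phi (snd p)) =
  if forallb negb ds then (fun p => Derive_n phi (length ds) (snd p)) else (fun _ => 0).
Proof.
  induction ds as [|b ds IH]; simpl; auto.
  rewrite IH. destruct b, (forallb negb ds); simpl; try apply pD_const;
    apply functional_extensionality; intros p; unfold pD; simpl; [apply Derive_const | reflexivity].
Qed.

Lemma smooth1_smooth_on_fst phi : smooth1 phi -> exists e, 0 < e /\ smooth_on e (fun p => phi (fst p)).
Proof.
  intros [e [He H]]. exists e; split; auto.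
  intros ds [x y] [Hx Hy]; simpl in *. rewrite pDs_fun_fst. destruct (forallb (fun b => b) ds); simpl.
  - split; [|split].
    + apply H, Hx.
    + apply ex_derive_const.
    + exact (continuous_comp fst (Derive_n phi (length ds)) (x, y) (continuous_fst x y)
               (ex_derive_continuous _ _ (H _ _ Hx))).
  - split; [|split]; [apply ex_derive_const | apply ex_derive_const | apply continuous_const].
Qed.

Lemma smooth1_smooth_on_snd phi : smooth1 phi -> exists e, 0 < e /\ smooth_on e (fun p => phi (snd p)).
Proof.
  intros [e [He H]]. exists e; split; auto.
  intros ds [x y] [Hx Hy]; simpl in *. rewrite pDs_fun_snd. destruct (forallb negb ds); simpl.
  - split; [|split].
    + apply ex_derive_const.
    + apply H, Hy.
    + exact (continuous_comp snd (Derive_n phi (length ds)) (x, y) (continuous_snd x y)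
               (ex_derive_continuous _ _ (H _ _ Hy))).
  - split; [|split]; [apply ex_derive_const | apply ex_derive_const | apply continuous_const].
Qed.

Lemma pDs_scal c g ds : pDs ds (fun p => c * g p) = fun p => c * pDs ds g p.
Proof. induction ds as [|d ds IH]; simpl; auto. rewrite IH. apply pD_scal. Qed.

Lemma pDs_const c ds : pDs ds (fun _ => c) = match ds with nil => fun _ => c | _ => fun _ => 0 end.
Proof. induction ds as [|d ds IH]; simpl; auto. rewrite IH. destruct ds; apply pD_const. Qed.

Lemma continuous_continuity_2d_pt (h : R * R -> R) x y :
  continuous h (x, y) -> continuity_2d_pt (fun u v => h (u, v)) x y.
Proof. intros H. apply continuity_2d_pt_filterlim, continuous_uncurry, H. Qed.

Section SmoothCalculus.

Variable e : R.

Lemma pD_swap g p : smooth_on e g -> near0 e p -> pD true (pD false g) p = pD false (pD true g) p.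
Proof.
  intros H Hp. destruct p as [x y]. unfold pD; simpl.
  apply (Schwarz (fun u v => g (u, v)) x y).
  - destruct (near0_locally_2d e x y Hp) as [del Hd]. exists del. intros u v Hu Hv.
    specialize (Hd u v Hu Hv).
    destruct (H nil (u, v) Hd) as [A1 [A2 _]].
    destruct (H (false :: nil) (u, v) Hd) as [B1 _].
    destruct (H (true :: nil) (u, v) Hd) as [_ [C2 _]].
    simpl in *. unfold pD in *; simpl in *. auto.
  - destruct (H (true :: false :: nil) (x, y) Hp) as [_ [_ Hc]].
    apply continuous_continuity_2d_pt in Hc. exact Hc.
  - destruct (H (false :: true :: nil) (x, y) Hp) as [_ [_ Hc]].
    apply continuous_continuity_2d_pt in Hc. exact Hc.
Qed.

Lemma pDs_Permutation g : smooth_on e g ->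
  forall ds ds', Permutation ds ds' -> eq_near0 e (pDs ds g) (pDs ds' g).
Proof.
  intros H ds ds' P. induction P.
  - intros p _; reflexivity.
  - simpl. apply pD_eq_near0. auto.
  - intros p Hp. simpl. pose proof (pD_swap (pDs l g) p (smooth_on_pDs e l g H) Hp).
    destruct x, y; auto.
  - intros p Hp. rewrite IHP1; auto.
Qed.

Lemma pDs_plus g h : smooth_on e g -> smooth_on e h -> forall ds,
  eq_near0 e (pDs ds (fun p => g p + h p)) (fun p => pDs ds g p + pDs ds h p).
Proof.
  intros Hg Hh ds. induction ds as [|d ds IH]; simpl.
  - intros p _; reflexivity.
  - intros p Hp. rewrite (pD_eq_near0 e d _ _ IH p Hp).
    apply pD_plus; apply (smooth_on_ex_partials e); auto; apply smooth_on_pDs; auto.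
Qed.

Lemma pDs_minus g h : smooth_on e g -> smooth_on e h -> forall ds,
  eq_near0 e (pDs ds (fun p => g p - h p)) (fun p => pDs ds g p - pDs ds h p).
Proof.
  intros Hg Hh ds p Hp.
  replace (fun p => g p - h p) with (fun p => g p + (-1) * h p)
    by (apply functional_extensionality; intros; ring).
  rewrite (pDs_plus g (fun p => -1 * h p) Hg (smooth_on_scal e (-1) h Hh) ds p Hp).
  rewrite pDs_scal. ring.
Qed.

Lemma pD_minus d g h p : smooth_on e g -> smooth_on e h -> near0 e p ->
  pD d (fun q => g q - h q) p = pD d g p - pD d h p.
Proof. intros Hg Hh Hp. exact (pDs_minus g h Hg Hh (d :: nil) p Hp). Qed.

End SmoothCalculus.

(** * Flatness at the origin *)

Definition flat (k : nat) (g : R * R -> R) : Prop :=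
  forall ds, (length ds < k)%nat -> pDs ds g (0, 0) = 0.

Lemma flat_0 g : flat 0 g.
Proof. intros ds H; lia. Qed.

Lemma flat_le k m g : flat k g -> (m <= k)%nat -> flat m g.
Proof. intros H Hm ds Hl. apply H. lia. Qed.

Lemma flat_S k g : g (0, 0) = 0 -> (forall d, flat k (pD d g)) -> flat (S k) g.
Proof.
  intros H0 H ds Hl. destruct ds as [|d ds'] using rev_ind.
  - exact H0.
  - rewrite pDs_rcons. apply H. rewrite length_app in Hl. simpl in Hl. lia.
Qed.

Lemma flat_S_origin k g : flat (S k) g -> g (0, 0) = 0.
Proof. intros H. apply (H nil). simpl; lia. Qed.

Lemma flat_S_pD k d g : flat (S k) g -> flat k (pD d g).
Proof. intros H ds Hl. rewrite <- pDs_rcons. apply H. rewrite length_app; simpl; lia. Qed.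

Lemma flat_pD k d g : flat k g -> flat (k - 1) (pD d g).
Proof.
  intros H. destruct k.
  - apply flat_0.
  - replace (S k - 1)%nat with k by lia. apply flat_S_pD, H.
Qed.

Lemma flat_scal k c g : flat k g -> flat k (fun p => c * g p).
Proof. intros H ds Hl. rewrite pDs_scal, H; auto. ring. Qed.


Lemma flat_fst : flat 1 fst.
Proof. intros ds Hl. destruct ds; simpl in *; [reflexivity | lia]. Qed.

Lemma flat_snd : flat 1 snd.
Proof. intros ds Hl. destruct ds; simpl in *; [reflexivity | lia]. Qed.

Section Flat.

Variable e : R.
Hypothesis He : 0 < e.

Lemma flat_eq_near0 k g h : eq_near0 e g h -> flat k g -> flat k h.
Proof.
  intros Hgh H ds Hl. rewrite <- (pDs_eq_near0 e ds g h Hgh (0, 0) (near0_origin e He)). apply H, Hl.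
Qed.

Lemma flat_zero_near0 k g : eq_near0 e g (fun _ => 0) -> flat k g.
Proof.
  intros H. apply flat_eq_near0 with (fun _ => 0).
  - intros p Hp; symmetry; auto.
  - intros ds Hl. rewrite pDs_const. destruct ds; auto.
Qed.

Lemma flat_plus k g h : smooth_on e g -> smooth_on e h -> flat k g -> flat k h ->
  flat k (fun p => g p + h p).
Proof.
  intros Hg Hh H1 H2 ds Hl. rewrite (pDs_plus e g h Hg Hh ds (0, 0) (near0_origin e He)).
  rewrite H1, H2; auto. ring.
Qed.

Lemma flat_minus k g h : smooth_on e g -> smooth_on e h -> flat k g -> flat k h ->
  flat k (fun p => g p - h p).
Proof.
  intros Hg Hh H1 H2 ds Hl. rewrite (pDs_minus e g h Hg Hh ds (0, 0) (near0_origin e He)).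
  rewrite H1, H2; auto. ring.
Qed.

Lemma flat_mult m : forall g h j k, smooth_on e g -> smooth_on e h -> flat j g -> flat k h ->
  (m <= j + k)%nat -> flat m (fun p => g p * h p).
Proof.
  induction m; intros g h j k Hg Hh H1 H2 Hm.
  - apply flat_0.
  - apply flat_S.
    + destruct j.
      * destruct k; [lia|]. rewrite (flat_S_origin k h H2). ring.
      * rewrite (flat_S_origin j g H1). ring.
    + intros d. apply flat_eq_near0 with (fun p => pD d g p * h p + g p * pD d h p).
      { intros p Hp. symmetry. apply pD_mult; apply (smooth_on_ex_partials e); auto. }
      apply flat_plus; try (apply smooth_on_mult; auto; apply smooth_on_pD; auto).
      * apply IHm with (j - 1)%nat k; auto; [apply smooth_on_pD; auto | apply flat_pD; auto | lia].
      * apply IHm with j (k - 1)%nat; auto; [apply smooth_on_pD; auto | apply flat_pD; auto | lia].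
Qed.

Lemma flat_pow k g n : smooth_on e g -> flat k g -> flat (n * k) (fun p => g p ^ n).
Proof.
  intros Hg H. induction n.
  - apply flat_0.
  - exact (flat_mult (S n * k) g (fun p => g p ^ n) k (n * k) Hg (smooth_on_pow e g n Hg) H IHn ltac:(lia)).
Qed.

Lemma flat_pD_minus k d g h : smooth_on e g -> smooth_on e h -> flat k (fun q => g q - h q) ->
  flat (k - 1) (fun q => pD d g q - pD d h q).
Proof.
  intros Hg Hh H. apply flat_eq_near0 with (pD d (fun q => g q - h q)).
  - intros q Hq. apply (pD_minus e); auto.
  - apply flat_pD, H.
Qed.

End Flat.

Section FlatComp.

Variables (d e : R) (t : R * R -> R * R).
Hypotheses (Hd : 0 < d) (Ht : maps_into d e t) (Ht1 : smooth_on d (tfst t))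
  (Ht2 : smooth_on d (tsnd t)) (Ht0 : t (0, 0) = (0, 0)).

Lemma flat_comp j g : smooth_on e g -> flat j g -> flat j (fun q => g (t q)).
Proof.
  revert g. induction j; intros g Hg Hj.
  - apply flat_0.
  - apply flat_S.
    + rewrite Ht0. apply (flat_S_origin j g Hj).
    + intros b. apply (flat_eq_near0 d Hd) with
        (fun q => pD true g (t q) * pD b (tfst t) q + pD false g (t q) * pD b (tsnd t) q).
      { intros q Hq. symmetry. apply (pD_comp d e); auto. }
      assert (Su : smooth_on e (pD true g)) by (apply smooth_on_pD, Hg).
      assert (Sv : smooth_on e (pD false g)) by (apply smooth_on_pD, Hg).
      apply (flat_plus d Hd); try (apply smooth_on_mult; [apply (smooth_on_comp d e); auto | apply smooth_on_pD; auto]);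
        (apply (flat_mult d Hd) with j 0%nat;
          [apply (smooth_on_comp d e); auto | apply smooth_on_pD; auto
          | apply IHj; [auto | apply flat_S_pD; auto] | apply flat_0 | lia]).
Qed.

End FlatComp.

Section FlatCompSub.

Variables (d e : R) (t t' : R * R -> R * R).
Hypotheses (Hd : 0 < d)
  (Ht : maps_into d e t) (Ht1 : smooth_on d (tfst t)) (Ht2 : smooth_on d (tsnd t)) (Ht0 : t (0, 0) = (0, 0))
  (Ht' : maps_into d e t') (Ht'1 : smooth_on d (tfst t')) (Ht'2 : smooth_on d (tsnd t'))
  (Ht'0 : t' (0, 0) = (0, 0)).

Lemma pD_comp_sub g b q : smooth_on e g -> near0 d q ->
  pD b (fun q => g (t q) - g (t' q)) q =
    ((pD true g (t q) - pD true g (t' q)) * pD b (tfst t) q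
       + pD true g (t' q) * (pD b (tfst t) q - pD b (tfst t') q)) +
    ((pD false g (t q) - pD false g (t' q)) * pD b (tsnd t) q
       + pD false g (t' q) * (pD b (tsnd t) q - pD b (tsnd t') q)).
Proof.
  intros Hg Hq.
  rewrite (pD_minus d b _ _ q (smooth_on_comp d e t Ht g Hg Ht1 Ht2)
             (smooth_on_comp d e t' Ht' g Hg Ht'1 Ht'2) Hq).
  rewrite (pD_comp d e t Ht g q b Hg Hq Ht1 Ht2), (pD_comp d e t' Ht' g q b Hg Hq Ht'1 Ht'2).
  ring.
Qed.

Lemma flat_comp_sub k : (1 <= k)%nat ->
  flat k (fun q => tfst t q - tfst t' q) -> flat k (fun q => tsnd t q - tsnd t' q) ->
  forall m g j, smooth_on e g -> flat j g -> (m <= j + k - 1)%nat ->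
  flat m (fun q => g (t q) - g (t' q)).
Proof.
  intros Hk K1 K2 m. induction m; intros g j Hg Hj Hmj.
  - apply flat_0.
  - apply flat_S; [rewrite Ht0, Ht'0; ring |]. intros b.
    eapply (flat_eq_near0 d Hd); [intros q Hq; symmetry; apply pD_comp_sub; auto |].
    assert (Sg : forall c, smooth_on e (pD c g)) by (intros; apply smooth_on_pD, Hg).
    assert (Sgt : forall c, smooth_on d (fun q => pD c g (t q)))
      by (intros; apply (smooth_on_comp d e); auto).
    assert (Sgt' : forall c, smooth_on d (fun q => pD c g (t' q)))
      by (intros; apply (smooth_on_comp d e); auto).
    assert (Sb : forall h, smooth_on d h -> smooth_on d (pD b h)) by (intros; apply smooth_on_pD; auto).
    assert (Sgt_sub : forall c, smooth_on d (fun q => pD c g (t q) - pD c g (t' q)))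
      by (intros; apply smooth_on_minus; auto).
    assert (Sb_sub : forall h h', smooth_on d h -> smooth_on d h' ->
              smooth_on d (fun q => pD b h q - pD b h' q)) by (intros; apply smooth_on_minus; auto).
    assert (Hterm : forall c h h', smooth_on d h -> smooth_on d h' ->
              flat k (fun q => h q - h' q) ->
              flat m (fun q => (pD c g (t q) - pD c g (t' q)) * pD b h q
                                + pD c g (t' q) * (pD b h q - pD b h' q))).
    { intros c h h' Sh Sh' Hhh. apply (flat_plus d Hd); try (apply smooth_on_mult; auto).
      - apply (flat_mult d Hd) with m 0%nat; auto; [| apply flat_0 | lia].
        apply IHm with (j - 1)%nat; auto. apply flat_pD, Hj. lia.
      - apply (flat_mult d Hd) with (j - 1)%nat (k - 1)%nat; auto; [| apply (flat_pD_minus d Hd); auto | lia].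
        apply (flat_comp d e t'); auto. apply flat_pD, Hj. }
    apply (flat_plus d Hd); try (apply smooth_on_plus; apply smooth_on_mult; auto); apply Hterm; auto.
Qed.

End FlatCompSub.

(** * Polynomial test functions *)

Ltac pD_poly := apply functional_extensionality; intros [x y]; unfold pD; simpl;
  apply is_derive_unique; auto_derive; [auto | ring].

Definition sqdiff : R * R -> R := fun p => fst p ^ 2 - snd p ^ 2.
Definition sqsum : R * R -> R := fun p => fst p ^ 2 + snd p ^ 2.
Definition cube_axes (x y : R) : R * R -> R := fun p => x * fst p ^ 3 + y * snd p ^ 3.
Definition linmap (l1 l2 l3 l4 : R) : R * R -> R * R :=
  fun q => (l1 * fst q + l2 * snd q, l3 * fst q + l4 * snd q).

Lemma smooth_on_sqdiff e : smooth_on e sqdiff.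
Proof. unfold sqdiff; smooth. Qed.
Lemma smooth_on_sqsum e : smooth_on e sqsum.
Proof. unfold sqsum; smooth. Qed.
Lemma smooth_on_cube_axes e x y : smooth_on e (cube_axes x y).
Proof. unfold cube_axes; smooth. Qed.
Lemma smooth_on_linmap_fst e l1 l2 l3 l4 : smooth_on e (tfst (linmap l1 l2 l3 l4)).
Proof. unfold tfst, linmap; simpl; smooth. Qed.
Lemma smooth_on_linmap_snd e l1 l2 l3 l4 : smooth_on e (tsnd (linmap l1 l2 l3 l4)).
Proof. unfold tsnd, linmap; simpl; smooth. Qed.

Lemma linmap_origin l1 l2 l3 l4 : linmap l1 l2 l3 l4 (0, 0) = (0, 0).
Proof. unfold linmap; simpl. f_equal; ring. Qed.

Lemma linmap_maps_into d e l1 l2 l3 l4 : 0 < d ->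
  d * (1 + Rabs l1 + Rabs l2 + Rabs l3 + Rabs l4) <= e -> maps_into d e (linmap l1 l2 l3 l4).
Proof.
  intros Hd Hle q [Hu Hv].
  pose proof (Rabs_pos l1). pose proof (Rabs_pos l2). pose proof (Rabs_pos l3). pose proof (Rabs_pos l4).
  pose proof (Rabs_pos (fst q)). pose proof (Rabs_pos (snd q)).
  unfold linmap; split; simpl; (eapply Rle_lt_trans; [apply Rabs_triang|]); rewrite !Rabs_mult; nra.
Qed.

Ltac flat_lin e := repeat match goal with
  | |- flat _ _ => assumption
  | |- flat _ (fun x => @?A x + @?B x) => apply (flat_plus e ltac:(lra) _ A B); [smooth | smooth | | ]
  | |- flat _ (fun x => @?A x - @?B x) => apply (flat_minus e ltac:(lra) _ A B); [smooth | smooth | | ]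
  | |- flat _ (fun x => ?c * @?A x) => apply (flat_scal _ c A)
  end.

Lemma flat_fst_pow n : flat n (fun p => fst p ^ n).
Proof.
  pose proof (flat_pow 1 Rlt_0_1 1 fst n (smooth_on_fst 1) flat_fst) as H.
  rewrite Nat.mul_1_r in H. exact H.
Qed.

Lemma flat_snd_pow n : flat n (fun p => snd p ^ n).
Proof.
  pose proof (flat_pow 1 Rlt_0_1 1 snd n (smooth_on_snd 1) flat_snd) as H.
  rewrite Nat.mul_1_r in H. exact H.
Qed.

Lemma flat_sqdiff : flat 2 sqdiff.
Proof. unfold sqdiff. flat_lin 1; [apply flat_fst_pow | apply flat_snd_pow]. Qed.

Lemma flat_sqsum : flat 2 sqsum.
Proof. unfold sqsum. flat_lin 1; [apply flat_fst_pow | apply flat_snd_pow]. Qed.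

Lemma flat_cube_axes x y : flat 3 (cube_axes x y).
Proof. unfold cube_axes. flat_lin 1; [apply flat_fst_pow | apply flat_snd_pow]. Qed.

Lemma flat_sub_linear_part e g : 0 < e -> smooth_on e g -> g (0, 0) = 0 ->
  flat 2 (fun q => g q - (pD true g (0, 0) * fst q + pD false g (0, 0) * snd q)).
Proof.
  intros He Hg H0. apply flat_S; [simpl; rewrite H0; ring |].
  intros b. apply flat_S; [| intros; apply flat_0].
  assert (Sl : smooth_on e (fun q => pD true g (0, 0) * fst q + pD false g (0, 0) * snd q)) by smooth.
  rewrite (pD_minus e b g _ (0, 0) Hg Sl (near0_origin e He)).
  assert (E : pD b (fun q => pD true g (0, 0) * fst q + pD false g (0, 0) * snd q) =
              fun _ => if b then pD true g (0, 0) else pD false g (0, 0)) by (destruct b; pD_poly).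
  rewrite E. destruct b; ring.
Qed.

Lemma flat3_quadratic_form (al be ga : R) :
  flat 3 (fun p => al * fst p ^ 2 + be * (fst p * snd p) + ga * snd p ^ 2) ->
  al = 0 /\ be = 0 /\ ga = 0.
Proof.
  intros H.
  assert (E1 : pD true (fun p => al * fst p ^ 2 + be * (fst p * snd p) + ga * snd p ^ 2) =
               fun p => 2 * al * fst p + be * snd p) by pD_poly.
  assert (E2 : pD false (fun p => al * fst p ^ 2 + be * (fst p * snd p) + ga * snd p ^ 2) =
               fun p => be * fst p + 2 * ga * snd p) by pD_poly.
  assert (E11 : pD true (fun p : R * R => 2 * al * fst p + be * snd p) = fun _ => 2 * al) by pD_poly.
  assert (E12 : pD false (fun p : R * R => 2 * al * fst p + be * snd p) = fun _ => be) by pD_poly.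
  assert (E22 : pD false (fun p : R * R => be * fst p + 2 * ga * snd p) = fun _ => 2 * ga) by pD_poly.
  pose proof (H (true :: true :: nil) ltac:(simpl; lia)) as A.
  pose proof (H (false :: true :: nil) ltac:(simpl; lia)) as B.
  pose proof (H (false :: false :: nil) ltac:(simpl; lia)) as C.
  cbn [pDs fold_right] in A, B, C. rewrite E1, E11 in A. rewrite E1, E12 in B. rewrite E2, E22 in C.
  lra.
Qed.

Lemma flat4_cubic_form (k1 k2 k3 k4 : R) :
  flat 4 (fun p => k1 * fst p ^ 3 + k2 * (fst p ^ 2 * snd p) + k3 * (fst p * snd p ^ 2) + k4 * snd p ^ 3) ->
  k1 = 0 /\ k4 = 0.
Proof.
  intros H.
  assert (E1 : pD true (fun p => k1 * fst p ^ 3 + k2 * (fst p ^ 2 * snd p) + k3 * (fst p * snd p ^ 2)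
                                  + k4 * snd p ^ 3) =
               fun p => 3 * k1 * fst p ^ 2 + 2 * k2 * fst p * snd p + k3 * snd p ^ 2) by pD_poly.
  assert (E11 : pD true (fun p : R * R => 3 * k1 * fst p ^ 2 + 2 * k2 * fst p * snd p + k3 * snd p ^ 2) =
               fun p => 6 * k1 * fst p + 2 * k2 * snd p) by pD_poly.
  assert (E111 : pD true (fun p : R * R => 6 * k1 * fst p + 2 * k2 * snd p) = fun _ => 6 * k1) by pD_poly.
  assert (E2 : pD false (fun p => k1 * fst p ^ 3 + k2 * (fst p ^ 2 * snd p) + k3 * (fst p * snd p ^ 2)
                                   + k4 * snd p ^ 3) =
               fun p => k2 * fst p ^ 2 + 2 * k3 * fst p * snd p + 3 * k4 * snd p ^ 2) by pD_poly.
  assert (E22 : pD false (fun p : R * R => k2 * fst p ^ 2 + 2 * k3 * fst p * snd p + 3 * k4 * snd p ^ 2) =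
               fun p => 2 * k3 * fst p + 6 * k4 * snd p) by pD_poly.
  assert (E222 : pD false (fun p : R * R => 2 * k3 * fst p + 6 * k4 * snd p) = fun _ => 6 * k4) by pD_poly.
  pose proof (H (true :: true :: true :: nil) ltac:(simpl; lia)) as A.
  pose proof (H (false :: false :: false :: nil) ltac:(simpl; lia)) as C.
  cbn [pDs fold_right] in A, C. rewrite E1, E11, E111 in A. rewrite E2, E22, E222 in C.
  lra.
Qed.

Lemma pDs_du3_cube_axes k1 k2 : pDs (true :: true :: true :: nil) (cube_axes k1 k2) (0, 0) = 6 * k1.
Proof.
  assert (E1 : pD true (cube_axes k1 k2) = fun p => 3 * k1 * fst p ^ 2) by (unfold cube_axes; pD_poly).
  assert (E2 : pD true (fun p : R * R => 3 * k1 * fst p ^ 2) = fun p => 6 * k1 * fst p) by pD_poly.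
  assert (E3 : pD true (fun p : R * R => 6 * k1 * fst p) = fun p => 6 * k1) by pD_poly.
  cbn [pDs fold_right]. rewrite E1, E2, E3. reflexivity.
Qed.

Lemma pDs_dv3_cube_axes k1 k2 : pDs (false :: false :: false :: nil) (cube_axes k1 k2) (0, 0) = 6 * k2.
Proof.
  assert (E1 : pD false (cube_axes k1 k2) = fun p => 3 * k2 * snd p ^ 2) by (unfold cube_axes; pD_poly).
  assert (E2 : pD false (fun p : R * R => 3 * k2 * snd p ^ 2) = fun p => 6 * k2 * snd p) by pD_poly.
  assert (E3 : pD false (fun p : R * R => 6 * k2 * snd p) = fun p => 6 * k2) by pD_poly.
  cbn [pDs fold_right]. rewrite E1, E2, E3. reflexivity.
Qed.

Lemma pD_false_fst_mult (X : R * R -> R) : pD false (fun p => fst p * X p) = fun p => fst p * pD false X p.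
Proof. apply functional_extensionality; intros [x y]; unfold pD; simpl. apply Derive_scal. Qed.

Lemma pD_true_snd_mult (X : R * R -> R) : pD true (fun p => snd p * X p) = fun p => snd p * pD true X p.
Proof. apply functional_extensionality; intros [x y]; unfold pD; simpl. apply Derive_scal. Qed.

Lemma pDs_dv_fst_mult n (X : R * R -> R) :
  pDs (repeat false n) (fun p => fst p * X p) = fun p => fst p * pDs (repeat false n) X p.
Proof. induction n; simpl; auto. rewrite IHn. apply pD_false_fst_mult. Qed.

Lemma pDs_du_snd_mult n (X : R * R -> R) :
  pDs (repeat true n) (fun p => snd p * X p) = fun p => snd p * pDs (repeat true n) X p.
Proof. induction n; simpl; auto. rewrite IHn. apply pD_true_snd_mult. Qed.

Section Leibniz.

Variable e : R.

Lemma pDs_du_fst_mult g : smooth_on e g -> forall n,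
  eq_near0 e (pDs (repeat true n) (fun p => fst p * g p))
    (fun p => fst p * pDs (repeat true n) g p + INR n * pDs (repeat true (pred n)) g p).
Proof.
  intros Hg n. induction n.
  - intros p _. simpl. ring.
  - intros p Hp.
    change (pD true (pDs (repeat true n) (fun p => fst p * g p)) p =
            fst p * pD true (pDs (repeat true n) g) p + INR (S n) * pDs (repeat true n) g p).
    rewrite (pD_eq_near0 e true _ _ IHn p Hp).
    assert (SX := smooth_on_pDs e (repeat true n) g Hg).
    assert (SY := smooth_on_pDs e (repeat true (pred n)) g Hg).
    rewrite pD_plus by (apply (smooth_on_ex_partials e); auto; smooth; apply smooth_on_scal; auto).
    rewrite pD_mult by (apply (smooth_on_ex_partials e); auto; smooth).
    rewrite pD_scal, pD_fst_true, S_INR.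
    destruct n; [simpl; ring |].
    simpl pred. change (pD true (pDs (repeat true n) g) p) with (pDs (repeat true (S n)) g p). ring.
Qed.

Lemma pDs_dv_snd_mult g : smooth_on e g -> forall n,
  eq_near0 e (pDs (repeat false n) (fun p => snd p * g p))
    (fun p => snd p * pDs (repeat false n) g p + INR n * pDs (repeat false (pred n)) g p).
Proof.
  intros Hg n. induction n.
  - intros p _. simpl. ring.
  - intros p Hp.
    change (pD false (pDs (repeat false n) (fun p => snd p * g p)) p =
            snd p * pD false (pDs (repeat false n) g) p + INR (S n) * pDs (repeat false n) g p).
    rewrite (pD_eq_near0 e false _ _ IHn p Hp).
    assert (SX := smooth_on_pDs e (repeat false n) g Hg).
    assert (SY := smooth_on_pDs e (repeat false (pred n)) g Hg).
    rewrite pD_plus by (apply (smooth_on_ex_partials e); auto; smooth; apply smooth_on_scal; auto).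
    rewrite pD_mult by (apply (smooth_on_ex_partials e); auto; smooth).
    rewrite pD_scal, pD_snd_false, S_INR.
    destruct n; [simpl; ring |].
    simpl pred. change (pD false (pDs (repeat false n) g) p) with (pDs (repeat false (S n)) g p). ring.
Qed.

End Leibniz.

Lemma Permutation_sort_bool (ds : list bool) :
  Permutation ds (repeat false (count_occ Bool.bool_dec ds false) ++ repeat true (count_occ Bool.bool_dec ds true)).
Proof.
  induction ds as [|b ds IH]; simpl; auto.
  destruct b; simpl; [apply Permutation_cons_app | apply perm_skip]; exact IH.
Qed.

Lemma length_count_occ_bool (ds : list bool) :
  length ds = (count_occ Bool.bool_dec ds false + count_occ Bool.bool_dec ds true)%nat.
Proof. induction ds as [|b ds IH]; simpl; auto. destruct b; simpl; lia. Qed.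

Section Division.

Variable e : R.
Hypothesis He : 0 < e.

(** By Schwarz every derivative of order [< k] is a [D_v^a D_u^b]; the Leibniz
    rule turns it into a derivative of [u g] of order [< k + 1]. *)
Lemma flat_fst_mult_inv k g : smooth_on e g -> flat (S k) (fun p => fst p * g p) -> flat k g.
Proof.
  intros Hg H ds Hl.
  set (cf := count_occ Bool.bool_dec ds false). set (ct := count_occ Bool.bool_dec ds true).
  assert (Hlen : length ds = (cf + ct)%nat) by apply length_count_occ_bool.
  rewrite (pDs_Permutation e g Hg _ _ (Permutation_sort_bool ds) (0, 0) (near0_origin e He)). fold cf ct.
  assert (K := H (repeat false cf ++ repeat true (S ct)) ltac:(rewrite length_app, !repeat_length; lia)).
  rewrite pDs_app in K.
  rewrite (pDs_eq_near0 e (repeat false cf) _ _ (pDs_du_fst_mult e g Hg (S ct)) (0, 0) (near0_origin e He)) in K.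
  assert (SX := smooth_on_pDs e (repeat true (S ct)) g Hg).
  assert (SY := smooth_on_pDs e (repeat true ct) g Hg).
  simpl pred in K.
  rewrite (pDs_plus e _ _ (smooth_on_mult e _ _ (smooth_on_fst e) SX) (smooth_on_scal e _ _ SY)
             (repeat false cf) (0, 0) (near0_origin e He)) in K.
  rewrite pDs_dv_fst_mult, pDs_scal in K. simpl fst in K. rewrite pDs_app.
  assert (0 < INR (S ct)) by (apply lt_0_INR; lia). nra.
Qed.

Lemma flat_snd_mult_inv k g : smooth_on e g -> flat (S k) (fun p => snd p * g p) -> flat k g.
Proof.
  intros Hg H ds Hl.
  set (cf := count_occ Bool.bool_dec ds false). set (ct := count_occ Bool.bool_dec ds true).
  assert (Hlen : length ds = (cf + ct)%nat) by apply length_count_occ_bool.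
  assert (P : Permutation ds (repeat true ct ++ repeat false cf))
    by (eapply perm_trans; [apply Permutation_sort_bool | apply Permutation_app_comm]).
  rewrite (pDs_Permutation e g Hg _ _ P (0, 0) (near0_origin e He)).
  assert (K := H (repeat true ct ++ repeat false (S cf)) ltac:(rewrite length_app, !repeat_length; lia)).
  rewrite pDs_app in K.
  rewrite (pDs_eq_near0 e (repeat true ct) _ _ (pDs_dv_snd_mult e g Hg (S cf)) (0, 0) (near0_origin e He)) in K.
  assert (SX := smooth_on_pDs e (repeat false (S cf)) g Hg).
  assert (SY := smooth_on_pDs e (repeat false cf) g Hg).
  simpl pred in K.
  rewrite (pDs_plus e _ _ (smooth_on_mult e _ _ (smooth_on_snd e) SX) (smooth_on_scal e _ _ SY)
             (repeat true ct) (0, 0) (near0_origin e He)) in K.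
  rewrite pDs_du_snd_mult, pDs_scal in K. simpl snd in K. rewrite pDs_app.
  assert (0 < INR (S cf)) by (apply lt_0_INR; lia). nra.
Qed.

Lemma pDs_du3_fst_mult g : smooth_on e g ->
  pDs (true :: true :: true :: nil) (fun p => fst p * g p) (0, 0) = 3 * pDs (true :: true :: nil) g (0, 0).
Proof.
  intros Hg. pose proof (pDs_du_fst_mult e g Hg 3 (0, 0) (near0_origin e He)) as K.
  simpl repeat in K. rewrite K. simpl. ring.
Qed.

Lemma pDs_dv3_snd_mult g : smooth_on e g ->
  pDs (false :: false :: false :: nil) (fun p => snd p * g p) (0, 0) = 3 * pDs (false :: false :: nil) g (0, 0).
Proof.
  intros Hg. pose proof (pDs_dv_snd_mult e g Hg 3 (0, 0) (near0_origin e He)) as K.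
  simpl repeat in K. rewrite K. simpl. ring.
Qed.

End Division.

Lemma pDs_du3_snd_mult g : pDs (true :: true :: true :: nil) (fun p => snd p * g p) (0, 0) = 0.
Proof. pose proof (pDs_du_snd_mult 3 g) as K. simpl repeat in K. rewrite K. simpl. ring. Qed.

Lemma pDs_dv3_fst_mult g : pDs (false :: false :: false :: nil) (fun p => fst p * g p) (0, 0) = 0.
Proof. pose proof (pDs_dv_fst_mult 3 g) as K. simpl repeat in K. rewrite K. simpl. ring. Qed.

Lemma flat3_of_flat4_sub_cube e c g1 g3 : 0 < e -> smooth_on e c ->
  flat 4 (fun p => c p - cube_axes g1 g3 p) -> flat 3 c.
Proof.
  intros He Sc Ic. assert (Scub : smooth_on e (cube_axes g1 g3)) by apply smooth_on_cube_axes.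
  apply (flat_eq_near0 e He) with (fun p => (c p - cube_axes g1 g3 p) + cube_axes g1 g3 p);
    [intros p _; ring |].
  apply (flat_plus e He); [smooth | exact Scub | apply (flat_le 4); auto | apply flat_cube_axes].
Qed.

(** * Linear algebra of the quadratic terms *)

(** The form [m (u^2 - v^2) + n (u^2 + v^2)] composed with
    [(u, v) |-> (P u + Q v, R u + S v)] equals [al u^2 + be v^2]. *)
Definition quad_pullback (m n P Q R S al be : R) : Prop :=
  m * (P^2 - R^2) + n * (P^2 + R^2) = al /\
  m * (P*Q - R*S) + n * (P*Q + R*S) = 0 /\
  m * (Q^2 - S^2) + n * (Q^2 + S^2) = be.

(** Undo the congruence by [L = (P Q; R S)]:
    [(det L)^2 diag(m + n, n - m) = adj(L)^T diag(al, be) adj(L)]. *)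
Lemma quad_pullback_solve m n P Q R S al be : quad_pullback m n P Q R S al be ->
  (m + n) * (P*S - Q*R)^2 = al * S^2 + be * R^2 /\
  (n - m) * (P*S - Q*R)^2 = al * Q^2 + be * P^2 /\
  al * (Q * S) + be * (P * R) = 0.
Proof.
  intros [H1 [H2 H3]]. subst al be. split; [|split].
  - transitivity ((m * (P^2 - R^2) + n * (P^2 + R^2)) * S^2 + (m * (Q^2 - S^2) + n * (Q^2 + S^2)) * R^2
                  - 2 * (R * S) * (m * (P*Q - R*S) + n * (P*Q + R*S))); [ring | rewrite H2; ring].
  - transitivity ((m * (P^2 - R^2) + n * (P^2 + R^2)) * Q^2 + (m * (Q^2 - S^2) + n * (Q^2 + S^2)) * P^2
                  - 2 * (P * Q) * (m * (P*Q - R*S) + n * (P*Q + R*S))); [ring | rewrite H2; ring].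
  - transitivity ((P * S + Q * R) * (m * (P*Q - R*S) + n * (P*Q + R*S))); [ring | rewrite H2; ring].
Qed.

Lemma SO3_block (A : mat3) : SO3 A -> A 2%nat 0%nat = 0 -> A 2%nat 1%nat = 0 ->
  A 0%nat 1%nat = 0 -> A 1%nat 0%nat = 0 ->
  A 0%nat 0%nat ^ 2 = 1 /\ A 1%nat 1%nat ^ 2 = 1 /\ A 0%nat 2%nat = 0 /\ A 1%nat 2%nat = 0 /\
  A 2%nat 2%nat = A 0%nat 0%nat * A 1%nat 1%nat.
Proof.
  intros [HO Hdet] A20 A21 A01 A10.
  pose proof (HO 0%nat 0%nat ltac:(lia) ltac:(lia)) as O00. pose proof (HO 1%nat 1%nat ltac:(lia) ltac:(lia)) as O11.
  pose proof (HO 0%nat 2%nat ltac:(lia) ltac:(lia)) as O02. pose proof (HO 1%nat 2%nat ltac:(lia) ltac:(lia)) as O12.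
  unfold kron in O00, O11, O02, O12; simpl in O00, O11, O02, O12. unfold det3 in Hdet.
  rewrite A20, A21, A01, A10 in *.
  set (a00 := A 0%nat 0%nat) in *. set (a11 := A 1%nat 1%nat) in *. set (a22 := A 2%nat 2%nat) in *.
  set (a02 := A 0%nat 2%nat) in *. set (a12 := A 1%nat 2%nat) in *.
  assert (E00 : a00 ^ 2 = 1) by nra. assert (E11 : a11 ^ 2 = 1) by nra.
  assert (A02 : a02 = 0).
  { transitivity (a00 * (a00 * a02 + 0 * a12 + 0 * a22) + (1 - a00 ^ 2) * a02); [ring|].
    rewrite O02, E00; ring. }
  assert (A12 : a12 = 0).
  { transitivity (a11 * (0 * a02 + a11 * a12 + 0 * a22) + (1 - a11 ^ 2) * a12); [ring|].
    rewrite O12, E11; ring. }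
  rewrite A02, A12 in Hdet. repeat split; auto.
  transitivity (a00 * a11 * (a00 * (a11 * a22 - 0 * 0) - 0 * (0 * a22 - 0 * 0) + 0 * (0 * 0 - a11 * 0))
                + (1 - a00 ^ 2 * a11 ^ 2) * a22); [ring|].
  rewrite Hdet, E00, E11; ring.
Qed.

Lemma SO3_two_rows (A : mat3) a ah sg : 0 < a -> 0 < ah -> sg ^ 2 = 1 -> SO3 A ->
  A 2%nat 0%nat = 0 -> A 2%nat 1%nat = 0 ->
  0 < sg * (A 0%nat 0%nat + A 0%nat 1%nat * a) -> sg * (A 0%nat 1%nat * a - A 0%nat 0%nat) < 0 ->
  A 1%nat 0%nat + A 1%nat 1%nat * a = sg * ah * (A 0%nat 0%nat + A 0%nat 1%nat * a) ->
  A 1%nat 1%nat * a - A 1%nat 0%nat = - sg * ah * (A 0%nat 1%nat * a - A 0%nat 0%nat) ->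
  a = ah /\ A 0%nat 0%nat = sg /\ A 0%nat 1%nat = 0 /\ A 1%nat 0%nat = 0 /\ A 1%nat 1%nat = 1 /\
  A 0%nat 2%nat = 0 /\ A 1%nat 2%nat = 0 /\ A 2%nat 2%nat = sg.
Proof.
  intros Ha Hah Hsg HA A20 A21 Hx0 Hy0 Hx1 Hy1.
  set (a00 := A 0%nat 0%nat) in *. set (a01 := A 0%nat 1%nat) in *.
  set (a10 := A 1%nat 0%nat) in *. set (a11 := A 1%nat 1%nat) in *.
  assert (S00 : 0 < sg * a00) by lra.
  assert (E10 : a10 = sg * ah * a * a01) by nra.
  assert (E11 : a11 * a = sg * ah * a00) by nra.
  assert (O01 : a00 * a01 + a10 * a11 = 0).
  { destruct HA as [HO _]. pose proof (HO 0%nat 1%nat ltac:(lia) ltac:(lia)) as O.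
    unfold kron in O; simpl in O. fold a00 a01 a10 a11 in O. rewrite A20 in O. lra. }
  assert (Z : a * (a00 * a01 + a10 * a11) = a * a00 * a01 * (1 + sg ^ 2 * ah ^ 2)).
  { transitivity (a * a00 * a01 + a10 * (a11 * a)); [ring|]. rewrite E11, E10. ring. }
  rewrite O01, Hsg, Rmult_0_r in Z. symmetry in Z.
  assert (A01 : a01 = 0).
  { assert (a00 <> 0) by (intro H0; rewrite H0 in S00; lra).
    apply Rmult_integral in Z as [Z|Z]; [|nra].
    apply Rmult_integral in Z as [Z|Z]; [nra | exact Z]. }
  assert (A10 : a10 = 0) by (rewrite E10, A01; ring).
  destruct (SO3_block A HA A20 A21 A01 A10) as [Q00 [Q11 [A02 [A12 A22]]]]. fold a00 a11 in Q00, Q11, A22.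
  assert (V00 : a00 = sg).
  { assert (F : (a00 - sg) * (a00 + sg) = 0) by (transitivity (a00 ^ 2 - sg ^ 2); [ring | lra]).
    apply Rmult_integral in F as [F|F]; [lra | exfalso].
    assert (sg * a00 = - sg ^ 2) by (replace a00 with (- sg) by lra; ring). lra. }
  assert (P11 : a11 * a = ah) by (rewrite E11, V00; transitivity (sg ^ 2 * ah); [ring | rewrite Hsg; ring]).
  assert (V11 : a11 = 1).
  { assert (F : (a11 - 1) * (a11 + 1) = 0) by (transitivity (a11 ^ 2 - 1); [ring | lra]).
    apply Rmult_integral in F as [F|F]; [lra | nra]. }
  rewrite V11 in P11.
  repeat split; auto; [lra | rewrite A22, V00, V11; ring].
Qed.

Lemma Rmult_eq_reg_sqr x y c : x * c ^ 2 = y * c ^ 2 -> c <> 0 -> x = y.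
Proof. intros H Hc. apply Rmult_eq_reg_r with (c ^ 2); [exact H | apply pow_nonzero, Hc]. Qed.

Lemma sqr_eq_sign x y : x ^ 2 = 1 -> y ^ 2 = 1 -> 0 < x * y -> x = y.
Proof.
  intros Hx Hy Hxy.
  assert (F : (x - y) * (x + y) = 0) by (transitivity (x ^ 2 - y ^ 2); [ring | lra]).
  apply Rmult_integral in F as [F|F]; [lra | exfalso].
  assert (x * y = - y ^ 2) by (replace x with (- y) by lra; ring). lra.
Qed.

Lemma is_id3_intro (A : mat3) :
  A 0%nat 0%nat = 1 -> A 0%nat 1%nat = 0 -> A 0%nat 2%nat = 0 ->
  A 1%nat 0%nat = 0 -> A 1%nat 1%nat = 1 -> A 1%nat 2%nat = 0 ->
  A 2%nat 0%nat = 0 -> A 2%nat 1%nat = 0 -> A 2%nat 2%nat = 1 -> is_id3 A.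
Proof.
  intros. intros i j Hi Hj. unfold kron.
  destruct i as [|[|[|i]]]; try lia; destruct j as [|[|[|j]]]; try lia; simpl; auto.
Qed.

Section QuadraticTerms.

Variables (A : mat3) (a ah P Q R S : R).
Hypotheses (Ha : 0 < a) (Hah : 0 < ah) (HA : SO3 A)
  (A20 : A 2%nat 0%nat = 0) (A21 : A 2%nat 1%nat = 0).

Let x0 := A 0%nat 0%nat + A 0%nat 1%nat * a.
Let y0 := A 0%nat 1%nat * a - A 0%nat 0%nat.
Let x1 := A 1%nat 0%nat + A 1%nat 1%nat * a.
Let y1 := A 1%nat 1%nat * a - A 1%nat 0%nat.

Hypotheses
  (Ex0 : x0 * (P*S - Q*R)^2 = S^2 - R^2) (Ey0 : y0 * (P*S - Q*R)^2 = Q^2 - P^2)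
  (Ex1 : x1 * (P*S - Q*R)^2 = ah * (S^2 + R^2)) (Ey1 : y1 * (P*S - Q*R)^2 = ah * (Q^2 + P^2)).

Lemma quadratic_terms_diagonal : Q = 0 -> R = 0 -> 0 < P * S ->
  a = ah /\ is_id3 A /\ P = S /\ P * P = 1.
Proof.
  intros -> -> HD.
  assert (P0 : P <> 0) by (intro E; rewrite E in HD; lra).
  assert (S0 : S <> 0) by (intro E; rewrite E in HD; lra).
  assert (Fx0 : x0 * P ^ 2 = 1).
  { apply (Rmult_eq_reg_sqr _ _ S); [| exact S0].
    transitivity (x0 * (P * S - 0 * 0) ^ 2); [ring | rewrite Ex0; ring]. }
  assert (Fy0 : y0 * S ^ 2 = -1).
  { apply (Rmult_eq_reg_sqr _ _ P); [| exact P0].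
    transitivity (y0 * (P * S - 0 * 0) ^ 2); [ring | rewrite Ey0; ring]. }
  assert (Fx1 : x1 = 1 * ah * x0).
  { apply (Rmult_eq_reg_sqr _ _ P); [| exact P0]. apply (Rmult_eq_reg_sqr _ _ S); [| exact S0].
    transitivity (x1 * (P * S - 0 * 0) ^ 2); [ring | rewrite Ex1].
    transitivity (ah * (x0 * P ^ 2) * S ^ 2); [rewrite Fx0; ring | ring]. }
  assert (Fy1 : y1 = - (1) * ah * y0).
  { apply (Rmult_eq_reg_sqr _ _ S); [| exact S0]. apply (Rmult_eq_reg_sqr _ _ P); [| exact P0].
    transitivity (y1 * (P * S - 0 * 0) ^ 2); [ring | rewrite Ey1].
    transitivity (- ah * (y0 * S ^ 2) * P ^ 2); [rewrite Fy0; ring | ring]. }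
  assert (0 < P ^ 2) by (rewrite <- Rsqr_pow2; apply Rsqr_pos_lt, P0). assert (0 < S ^ 2) by (rewrite <- Rsqr_pow2; apply Rsqr_pos_lt, S0).
  destruct (SO3_two_rows A a ah 1 Ha Hah ltac:(ring) HA A20 A21 ltac:(fold x0; nra) ltac:(fold y0; nra)
              Fx1 Fy1) as [Haa [V00 [V01 [V10 [V11 [V02 [V12 V22]]]]]]].
  assert (X0 : x0 = 1) by (unfold x0; rewrite V00, V01; ring).
  assert (Y0 : y0 = -1) by (unfold y0; rewrite V00, V01; ring).
  rewrite X0 in Fx0. rewrite Y0 in Fy0.
  repeat split; auto.
  - apply is_id3_intro; auto.
  - apply sqr_eq_sign; lra.
  - lra.
Qed.

Lemma quadratic_terms_antidiagonal : P = 0 -> S = 0 -> 0 < - (Q * R) ->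
  a = ah /\ A 2%nat 2%nat = -1 /\ Q * R = -1.
Proof.
  intros -> -> HD.
  assert (Q0 : Q <> 0) by (intro E; rewrite E in HD; lra).
  assert (R0 : R <> 0) by (intro E; rewrite E in HD; lra).
  assert (Fx0 : x0 * Q ^ 2 = -1).
  { apply (Rmult_eq_reg_sqr _ _ R); [| exact R0].
    transitivity (x0 * (0 * 0 - Q * R) ^ 2); [ring | rewrite Ex0; ring]. }
  assert (Fy0 : y0 * R ^ 2 = 1).
  { apply (Rmult_eq_reg_sqr _ _ Q); [| exact Q0].
    transitivity (y0 * (0 * 0 - Q * R) ^ 2); [ring | rewrite Ey0; ring]. }
  assert (Fx1 : x1 = -1 * ah * x0).
  { apply (Rmult_eq_reg_sqr _ _ Q); [| exact Q0]. apply (Rmult_eq_reg_sqr _ _ R); [| exact R0].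
    transitivity (x1 * (0 * 0 - Q * R) ^ 2); [ring | rewrite Ex1].
    transitivity (- ah * (x0 * Q ^ 2) * R ^ 2); [rewrite Fx0; ring | ring]. }
  assert (Fy1 : y1 = - (-1) * ah * y0).
  { apply (Rmult_eq_reg_sqr _ _ R); [| exact R0]. apply (Rmult_eq_reg_sqr _ _ Q); [| exact Q0].
    transitivity (y1 * (0 * 0 - Q * R) ^ 2); [ring | rewrite Ey1].
    transitivity (ah * (y0 * R ^ 2) * Q ^ 2); [rewrite Fy0; ring | ring]. }
  assert (0 < Q ^ 2) by (rewrite <- Rsqr_pow2; apply Rsqr_pos_lt, Q0). assert (0 < R ^ 2) by (rewrite <- Rsqr_pow2; apply Rsqr_pos_lt, R0).
  destruct (SO3_two_rows A a ah (-1) Ha Hah ltac:(ring) HA A20 A21 ltac:(fold x0; nra) ltac:(fold y0; nra)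
              Fx1 Fy1) as [Haa [V00 [V01 [_ [_ [_ [_ V22]]]]]]].
  assert (X0 : x0 = -1) by (unfold x0; rewrite V00, V01; ring).
  assert (Y0 : y0 = 1) by (unfold y0; rewrite V00, V01; ring).
  rewrite X0 in Fx0. rewrite Y0 in Fy0.
  repeat split; auto.
  assert (QR2 : (Q * R) ^ 2 = 1) by (transitivity (Q ^ 2 * R ^ 2); [ring | nra]).
  assert (F : (Q * R - 1) * (Q * R + 1) = 0) by (transitivity ((Q * R) ^ 2 - 1); [ring | lra]).
  apply Rmult_integral in F as [F|F]; lra.
Qed.

End QuadraticTerms.

Lemma quadratic_terms_rigidity (A : mat3) a ah P Q R S :
  0 < a -> 0 < ah -> 0 < P * S - Q * R -> SO3 A ->
  quad_pullback (A 0%nat 0%nat) (A 0%nat 1%nat * a) P Q R S 1 (-1) ->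
  quad_pullback (A 1%nat 0%nat) (A 1%nat 1%nat * a) P Q R S ah ah ->
  quad_pullback (A 2%nat 0%nat) (A 2%nat 1%nat * a) P Q R S 0 0 ->
  a = ah /\ A 2%nat 0%nat = 0 /\ A 2%nat 1%nat = 0 /\
  ((is_id3 A /\ Q = 0 /\ R = 0 /\ P = S /\ P * P = 1) \/
   (A 2%nat 2%nat = -1 /\ P = 0 /\ S = 0 /\ Q * R = -1)).
Proof.
  intros Ha Hah HD HA H0 H1 H2.
  destruct (quad_pullback_solve _ _ _ _ _ _ _ _ H0) as [Ex0 [Ey0 C0]].
  destruct (quad_pullback_solve _ _ _ _ _ _ _ _ H1) as [Ex1 [Ey1 C1]].
  destruct (quad_pullback_solve _ _ _ _ _ _ _ _ H2) as [Ex2 [Ey2 _]].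
  assert (D0 : (P * S - Q * R) ^ 2 <> 0) by (apply pow_nonzero; lra).
  assert (X2 : A 2%nat 0%nat + A 2%nat 1%nat * a = 0).
  { assert (E : (A 2%nat 0%nat + A 2%nat 1%nat * a) * (P * S - Q * R) ^ 2 = 0) by (rewrite Ex2; ring).
    apply Rmult_integral in E as [E|E]; [exact E | contradiction]. }
  assert (Y2 : A 2%nat 1%nat * a - A 2%nat 0%nat = 0).
  { assert (E : (A 2%nat 1%nat * a - A 2%nat 0%nat) * (P * S - Q * R) ^ 2 = 0) by (rewrite Ey2; ring).
    apply Rmult_integral in E as [E|E]; [exact E | contradiction]. }
  assert (A20 : A 2%nat 0%nat = 0) by lra.
  assert (A21 : A 2%nat 1%nat = 0).
  { assert (A 2%nat 1%nat * a = 0) as E by lra. apply Rmult_integral in E as [E|E]; lra. }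
  assert (RP : P * R = 0) by nra. assert (QS : Q * S = 0) by nra.
  destruct (Req_dec P 0) as [P0|P0].
  - subst P.
    assert (Q0 : Q <> 0) by (intro E; rewrite E in HD; lra).
    assert (S = 0) by (apply Rmult_integral in QS as [E|E]; [contradiction | exact E]). subst S.
    destruct (quadratic_terms_antidiagonal A a ah 0 Q R 0 Ha Hah HA A20 A21
                ltac:(rewrite Ex0; ring) ltac:(rewrite Ey0; ring) ltac:(rewrite Ex1; ring)
                ltac:(rewrite Ey1; ring) eq_refl eq_refl ltac:(lra)) as [Haa [A22 HQR]].
    split; [exact Haa|]. split; [exact A20|]. split; [exact A21|]. right. repeat split; auto.
  - assert (R = 0) by (apply Rmult_integral in RP as [E|E]; [contradiction | exact E]). subst R.
    assert (S0 : S <> 0) by (intro E; rewrite E in HD; lra).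
    assert (Q = 0) by (apply Rmult_integral in QS as [E|E]; [exact E | contradiction]). subst Q.
    destruct (quadratic_terms_diagonal A a ah P 0 0 S Ha Hah HA A20 A21
                ltac:(rewrite Ex0; ring) ltac:(rewrite Ey0; ring) ltac:(rewrite Ex1; ring)
                ltac:(rewrite Ey1; ring) eq_refl eq_refl ltac:(lra)) as [Haa [Hid [HPS HP]]].
    split; [exact Haa|]. split; [exact A20|]. split; [exact A21|]. left. repeat split; auto.
Qed.

Lemma cube_pos_pos x k : 0 < k -> 0 < k * x ^ 3 -> 0 < x.
Proof.
  intros Hk H. destruct (Rle_or_lt x 0) as [Hx|Hx]; [exfalso | exact Hx].
  assert (x ^ 3 <= 0) by (replace (x ^ 3) with (x * x ^ 2) by ring; nra). nra.
Qed.

Lemma cubic_terms_rigidity (sg P Q R S k1 k3 m1 m3 : R) :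
  0 < k1 -> 0 < k3 -> 0 < m1 -> 0 < m3 ->
  sg * (k1 * P ^ 3 + k3 * R ^ 3) = m1 -> sg * (k1 * Q ^ 3 + k3 * S ^ 3) = m3 ->
  (sg = 1 /\ Q = 0 /\ R = 0 /\ P = S /\ P * P = 1) \/ (sg = -1 /\ P = 0 /\ S = 0 /\ Q * R = -1) ->
  P = 1 /\ Q = 0 /\ R = 0 /\ S = 1 /\ k1 = m1 /\ k3 = m3.
Proof.
  intros Hk1 Hk3 Hm1 Hm3 C1 C3 [(Hsg & HQ & HR & HPS & HP2) | (Hsg & HP & HS & HQR)].
  - rewrite Hsg, HQ, HR, <- HPS in *.
    assert (P1 : P = 1).
    { assert (0 < P) by (apply (cube_pos_pos P k1); auto; rewrite <- C1 in Hm1; lra).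
      assert (F : (P - 1) * (P + 1) = 0) by (transitivity (P * P - 1); [ring | lra]).
      apply Rmult_integral in F as [F|F]; lra. }
    rewrite P1 in *. repeat split; auto; lra.
  - exfalso. rewrite Hsg, HP, HS in *.
    assert (0 < - R).
    { apply (cube_pos_pos (- R) k3); auto. replace (k3 * (- R) ^ 3) with m1 by (rewrite <- C1; ring). auto. }
    assert (0 < - Q).
    { apply (cube_pos_pos (- Q) k1); auto. replace (k1 * (- Q) ^ 3) with m3 by (rewrite <- C3; ring). auto. }
    nra.
Qed.

(** * Comparing the 3-jets of two normal forms *)

Definition lin_part (t : R * R -> R * R) : R * R -> R * R :=
  linmap (pD true (tfst t) (0, 0)) (pD false (tfst t) (0, 0))
         (pD true (tsnd t) (0, 0)) (pD false (tsnd t) (0, 0)).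

Section Rows.

Variables (d ef : R) (t : R * R -> R * R).
Hypotheses (Hd : 0 < d) (Ht : maps_into d ef t) (Ht1 : smooth_on d (tfst t))
  (Ht2 : smooth_on d (tsnd t)) (Ht0 : t (0, 0) = (0, 0)) (HL : maps_into d ef (lin_part t)).

Let P := pD true (tfst t) (0, 0).
Let Q := pD false (tfst t) (0, 0).
Let R_ := pD true (tsnd t) (0, 0).
Let S := pD false (tsnd t) (0, 0).

Lemma flat_comp_lin_part_sub k g j : smooth_on ef g -> flat j g -> (k <= j + 1)%nat ->
  flat k (fun q => g (t q) - g (lin_part t q)).
Proof.
  intros Hg Hj Hk.
  apply (flat_comp_sub d ef t (lin_part t)) with (k := 2%nat) (j := j); auto;
    [apply smooth_on_linmap_fst | apply smooth_on_linmap_snd | apply linmap_origin | | | lia].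
  - apply (flat_sub_linear_part d); auto. unfold tfst; rewrite Ht0; reflexivity.
  - apply (flat_sub_linear_part d); auto. unfold tsnd; rewrite Ht0; reflexivity.
Qed.

Lemma quadratic_row a (b c F : R * R -> R) (a0 a1 a2 Tu Tv : R) :
  smooth_on ef b -> smooth_on ef c -> flat 3 b -> flat 3 c -> smooth_on d F ->
  flat 3 (fun q => F q - (Tu * fst q ^ 2 + Tv * snd q ^ 2)) ->
  flat 3 (fun q => (a0 * sqdiff (t q) + a1 * (a * sqsum (t q) + b (t q)) + a2 * c (t q)) - F q) ->
  quad_pullback a0 (a1 * a) P Q R_ S Tu Tv.
Proof.
  intros Sb Sc Ib Ic SF IF H.
  set (L := lin_part t).
  assert (St : forall g, smooth_on ef g -> smooth_on d (fun q => g (t q)))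
    by (intros; apply (smooth_on_comp d ef); auto).
  assert (SL : forall g, smooth_on ef g -> smooth_on d (fun q => g (L q)))
    by (intros; apply (smooth_on_comp d ef); auto; [apply smooth_on_linmap_fst | apply smooth_on_linmap_snd]).
  assert (Sdt := St _ (smooth_on_sqdiff ef)). assert (Sst := St _ (smooth_on_sqsum ef)).
  assert (SdL := SL _ (smooth_on_sqdiff ef)). assert (SsL := SL _ (smooth_on_sqsum ef)).
  assert (Sbt := St _ Sb). assert (Sct := St _ Sc).
  assert (K1 : flat 3 (fun q => sqdiff (t q) - sqdiff (L q)))
    by (apply (flat_comp_lin_part_sub _ _ 2); [apply smooth_on_sqdiff | apply flat_sqdiff | lia]).
  assert (K2 : flat 3 (fun q => sqsum (t q) - sqsum (L q)))
    by (apply (flat_comp_lin_part_sub _ _ 2); [apply smooth_on_sqsum | apply flat_sqsum | lia]).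
  assert (K3 : flat 3 (fun q => b (t q))) by (apply (flat_comp d ef t); auto).
  assert (K4 : flat 3 (fun q => c (t q))) by (apply (flat_comp d ef t); auto).
  assert (Hq : flat 3 (fun p => (a0 * (P^2 - R_^2) + a1 * a * (P^2 + R_^2) - Tu) * fst p ^ 2 +
                               (2 * (a0 * (P*Q - R_*S) + a1 * a * (P*Q + R_*S))) * (fst p * snd p) +
                               (a0 * (Q^2 - S^2) + a1 * a * (Q^2 + S^2) - Tv) * snd p ^ 2)).
  { apply (flat_eq_near0 d Hd) with (fun q =>
        ((a0 * sqdiff (t q) + a1 * (a * sqsum (t q) + b (t q)) + a2 * c (t q)) - F q)
        + (F q - (Tu * fst q ^ 2 + Tv * snd q ^ 2))
        - (a0 * (sqdiff (t q) - sqdiff (L q)) + (a1 * a) * (sqsum (t q) - sqsum (L q))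
           + a1 * b (t q) + a2 * c (t q))).
    - intros q _. unfold L, lin_part, linmap, sqdiff, sqsum, P, Q, R_, S. simpl. ring.
    - flat_lin d. }
  apply flat3_quadratic_form in Hq. unfold quad_pullback. lra.
Qed.

Lemma cubic_row (c ch : R * R -> R) (a2 g1 g3 h1 h3 : R) :
  smooth_on ef c -> smooth_on d ch ->
  flat 4 (fun p => c p - cube_axes g1 g3 p) -> flat 4 (fun p => ch p - cube_axes h1 h3 p) ->
  flat 4 (fun q => a2 * c (t q) - ch q) ->
  a2 * (g1 * P^3 + g3 * R_^3) = h1 /\ a2 * (g1 * Q^3 + g3 * S^3) = h3.
Proof.
  intros Sc Sch Ic Ich H.
  set (L := lin_part t).
  assert (SL1 : smooth_on d (tfst L)) by apply smooth_on_linmap_fst.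
  assert (SL2 : smooth_on d (tsnd L)) by apply smooth_on_linmap_snd.
  assert (Sc3 : smooth_on ef (fun p => c p - cube_axes g1 g3 p))
    by (assert (smooth_on ef (cube_axes g1 g3)) by apply smooth_on_cube_axes; smooth).
  assert (Sch3 : smooth_on d (cube_axes h1 h3)) by apply smooth_on_cube_axes.
  assert (Sct : smooth_on d (fun q => c (t q))) by (apply (smooth_on_comp d ef); auto).
  assert (ScL : smooth_on d (fun q => c (L q))) by (apply (smooth_on_comp d ef); auto).
  assert (Sc3L : smooth_on d (fun q => c (L q) - cube_axes g1 g3 (L q)))
    by (apply (smooth_on_comp d ef L) with (g := fun p => c p - cube_axes g1 g3 p); auto).
  assert (K1 : flat 4 (fun q => c (t q) - c (L q))).
  { apply (flat_comp_lin_part_sub _ _ 3); auto.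
    apply (flat3_of_flat4_sub_cube ef c g1 g3); auto. apply (maps_into_pos d ef t); auto. }
  assert (K2 : flat 4 (fun q => c (L q) - cube_axes g1 g3 (L q))).
  { apply (flat_comp d ef L) with (g := fun p => c p - cube_axes g1 g3 p); auto. apply linmap_origin. }
  assert (Hq : flat 4 (fun p => (a2 * (g1 * P^3 + g3 * R_^3) - h1) * fst p ^ 3 +
       (a2 * (3 * g1 * P^2 * Q + 3 * g3 * R_^2 * S)) * (fst p ^ 2 * snd p) +
       (a2 * (3 * g1 * P * Q^2 + 3 * g3 * R_ * S^2)) * (fst p * snd p ^ 2) +
       (a2 * (g1 * Q^3 + g3 * S^3) - h3) * snd p ^ 3)).
  { apply (flat_eq_near0 d Hd) with (fun q => (a2 * c (t q) - ch q) - a2 * (c (t q) - c (L q))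
        - a2 * (c (L q) - cube_axes g1 g3 (L q)) + (ch q - cube_axes h1 h3 q)).
    - intros q _. unfold L, lin_part, linmap, cube_axes, P, Q, R_, S. simpl. ring.
    - flat_lin d. }
  apply flat4_cubic_form in Hq. lra.
Qed.

End Rows.

Lemma cube_axes_zero_of_flat4 d a e1 e2 x y : 0 < d -> smooth_on d e1 -> smooth_on d e2 ->
  flat 4 (fun q => fst q * e1 q - snd q * e2 q) ->
  flat 4 (fun q => 2 * a * (fst q * e1 q + snd q * e2 q) + cube_axes x y q) -> x = 0 /\ y = 0.
Proof.
  intros Hd Se1 Se2 Wm Wp.
  set (U1 := fun q : R * R => fst q * e1 q) in *. set (U2 := fun q : R * R => snd q * e2 q) in *.
  assert (SU1 : smooth_on d U1) by (unfold U1; smooth).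
  assert (SU2 : smooth_on d U2) by (unfold U2; smooth).
  assert (SUU : smooth_on d (fun q => 2 * a * (U1 q + U2 q))) by smooth.
  assert (Sxy : smooth_on d (cube_axes x y)) by apply smooth_on_cube_axes.
  assert (Z0 := near0_origin d Hd).
  assert (A1 := Wm (true :: true :: true :: nil) ltac:(simpl; lia)).
  assert (A2 := Wp (true :: true :: true :: nil) ltac:(simpl; lia)).
  assert (B1 := Wm (false :: false :: false :: nil) ltac:(simpl; lia)).
  assert (B2 := Wp (false :: false :: false :: nil) ltac:(simpl; lia)).
  rewrite (pDs_minus d U1 U2 SU1 SU2 _ (0, 0) Z0) in A1. rewrite (pDs_minus d U1 U2 SU1 SU2 _ (0, 0) Z0) in B1.
  rewrite (pDs_plus d _ _ SUU Sxy _ (0, 0) Z0), pDs_scal, (pDs_plus d U1 U2 SU1 SU2 _ (0, 0) Z0) in A2.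
  rewrite (pDs_plus d _ _ SUU Sxy _ (0, 0) Z0), pDs_scal, (pDs_plus d U1 U2 SU1 SU2 _ (0, 0) Z0) in B2.
  unfold U1, U2 in A1, A2, B1, B2.
  rewrite (pDs_du3_fst_mult d Hd e1 Se1), pDs_du3_snd_mult in A1, A2.
  rewrite (pDs_dv3_snd_mult d Hd e2 Se2), pDs_dv3_fst_mult in B1, B2.
  rewrite pDs_du3_cube_axes in A2. rewrite pDs_dv3_cube_axes in B2.
  split; nra.
Qed.

Section NearIdentity.

Variables (d ef : R) (t : R * R -> R * R).
Hypotheses (Hd : 0 < d) (Hdef : d <= ef) (Ht : maps_into d ef t) (Ht1 : smooth_on d (tfst t))
  (Ht2 : smooth_on d (tsnd t)) (Ht0 : t (0, 0) = (0, 0)).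

Let e1 q := tfst t q - fst q.
Let e2 q := tsnd t q - snd q.

Lemma smooth_on_e1 : smooth_on d e1.
Proof. unfold e1; smooth. Qed.

Lemma smooth_on_e2 : smooth_on d e2.
Proof. unfold e2; smooth. Qed.

Lemma flat_comp_id_sub k m g j : (1 <= k)%nat -> flat k e1 -> flat k e2 ->
  smooth_on ef g -> flat j g -> (m <= j + k - 1)%nat -> flat m (fun q => g (t q) - g q).
Proof.
  intros Hk K1 K2 Hg Hj Hm.
  apply (flat_comp_sub d ef t (fun q => q)) with (k := k) (j := j); auto.
  - apply maps_into_id, Hdef.
  - unfold tfst; smooth.
  - unfold tsnd; smooth.
Qed.

Lemma sqdiff_comp_sub q :
  sqdiff (t q) - sqdiff q = 2 * (fst q * e1 q - snd q * e2 q) + (e1 q * e1 q - e2 q * e2 q).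
Proof. unfold e1, e2, tfst, tsnd, sqdiff. ring. Qed.

Lemma sqsum_comp_sub q :
  sqsum (t q) - sqsum q = 2 * (fst q * e1 q + snd q * e2 q) + (e1 q * e1 q + e2 q * e2 q).
Proof. unfold e1, e2, tfst, tsnd, sqsum. ring. Qed.

Lemma cubic_row_b a (b bh : R * R -> R) (g1 g3 h1 h3 : R) :
  smooth_on ef b -> smooth_on ef bh ->
  flat 4 (fun p => b p - cube_axes g1 g3 p) -> flat 4 (fun p => bh p - cube_axes h1 h3 p) ->
  flat 2 e1 -> flat 2 e2 ->
  flat 4 (fun q => sqdiff (t q) - sqdiff q) ->
  flat 4 (fun q => (a * sqsum (t q) + b (t q)) - (a * sqsum q + bh q)) ->
  g1 = h1 /\ g3 = h3.
Proof.
  intros Sb Sbh Ib Ibh J1 J2 R0 R1.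
  assert (Se1 := smooth_on_e1). assert (Se2 := smooth_on_e2).
  assert (Sbd : smooth_on d b) by (apply (smooth_on_le ef); auto).
  assert (Sbhd : smooth_on d bh) by (apply (smooth_on_le ef); auto).
  assert (Sbt := smooth_on_comp d ef t Ht _ Sb Ht1 Ht2).
  assert (Sdt := smooth_on_comp d ef t Ht _ (smooth_on_sqdiff ef) Ht1 Ht2).
  assert (Sst := smooth_on_comp d ef t Ht _ (smooth_on_sqsum ef) Ht1 Ht2).
  assert (Sd := smooth_on_sqdiff d). assert (Ss := smooth_on_sqsum d).
  assert (Sg : smooth_on d (cube_axes g1 g3)) by apply smooth_on_cube_axes.
  assert (Sh : smooth_on d (cube_axes h1 h3)) by apply smooth_on_cube_axes.
  assert (I11 : flat 4 (fun q => e1 q * e1 q)) by (apply (flat_mult d Hd 4 e1 e1 2 2); auto).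
  assert (I22 : flat 4 (fun q => e2 q * e2 q)) by (apply (flat_mult d Hd 4 e2 e2 2 2); auto).
  assert (K : flat 4 (fun q => b (t q) - b q)).
  { apply (flat_comp_id_sub 2 4 b 3); auto; try lia.
    apply (flat3_of_flat4_sub_cube ef b g1 g3); auto. lra. }
  cut (g1 - h1 = 0 /\ g3 - h3 = 0); [lra |].
  apply (cube_axes_zero_of_flat4 d a e1 e2); auto.
  - apply (flat_eq_near0 d Hd) with
      (fun q => / 2 * (sqdiff (t q) - sqdiff q) - / 2 * (e1 q * e1 q - e2 q * e2 q)).
    + intros q _. rewrite sqdiff_comp_sub. field.
    + flat_lin d.
  - apply (flat_eq_near0 d Hd) with (fun q =>
        ((a * sqsum (t q) + b (t q)) - (a * sqsum q + bh q)) - a * (e1 q * e1 q + e2 q * e2 q)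
        - (b (t q) - b q) - (b q - cube_axes g1 g3 q) + (bh q - cube_axes h1 h3 q)).
    + intros q _.
      replace (a * sqsum (t q) + b (t q) - (a * sqsum q + bh q))
        with (a * (sqsum (t q) - sqsum q) + b (t q) - bh q) by ring.
      rewrite sqsum_comp_sub. unfold cube_axes. ring.
    + flat_lin d.
Qed.

(** Induction step: once [e1], [e2] are flat to order [k >= 2], the first two
    components make [u e1] and [v e2] flat to order [k + 2], and dividing by
    [u] and [v] gains one order. *)
Lemma flat_sub_id_all a b : 0 < a -> smooth_on ef b -> flat 3 b -> flat 2 e1 -> flat 2 e2 ->
  (forall k, flat k (fun q => sqdiff (t q) - sqdiff q)) ->
  (forall k, flat k (fun q => (a * sqsum (t q) + b (t q)) - (a * sqsum q + b q))) ->
  forall k, flat k e1 /\ flat k e2.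
Proof.
  intros Ha Sb Ib J1 J2 R0 R1.
  assert (Se1 := smooth_on_e1). assert (Se2 := smooth_on_e2).
  assert (Sbd : smooth_on d b) by (apply (smooth_on_le ef); auto).
  assert (Sbt := smooth_on_comp d ef t Ht _ Sb Ht1 Ht2).
  assert (Sdt := smooth_on_comp d ef t Ht _ (smooth_on_sqdiff ef) Ht1 Ht2).
  assert (Sst := smooth_on_comp d ef t Ht _ (smooth_on_sqsum ef) Ht1 Ht2).
  assert (Sd := smooth_on_sqdiff d). assert (Ss := smooth_on_sqsum d).
  assert (Step : forall k, flat (k + 2) e1 /\ flat (k + 2) e2).
  { induction k as [|k [K1 K2]]; [split; auto|].
    set (m := (k + 2)%nat) in *.
    assert (I11 : flat (m + 2) (fun q => e1 q * e1 q)) by (apply (flat_mult d Hd _ e1 e1 m m); auto; lia).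
    assert (I22 : flat (m + 2) (fun q => e2 q * e2 q)) by (apply (flat_mult d Hd _ e2 e2 m m); auto; lia).
    assert (K : flat (m + 2) (fun q => b (t q) - b q)) by (apply (flat_comp_id_sub m _ b 3); auto; lia).
    assert (R0m := R0 (m + 2)%nat). assert (R1m := R1 (m + 2)%nat).
    assert (R1m' : flat (m + 2) (fun q => sqsum (t q) - sqsum q)).
    { apply (flat_eq_near0 d Hd) with
        (fun q => / a * (((a * sqsum (t q) + b (t q)) - (a * sqsum q + b q)) - (b (t q) - b q)));
        [intros q _; field; lra | flat_lin d]. }
    replace (S k + 2)%nat with (S m) by (unfold m; lia).
    split; [apply (flat_fst_mult_inv d Hd) | apply (flat_snd_mult_inv d Hd)]; auto;
      replace (S (S m)) with (m + 2)%nat by lia.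
    - apply (flat_eq_near0 d Hd) with (fun q => / 4 *
          ((sqdiff (t q) - sqdiff q) + (sqsum (t q) - sqsum q) - 2 * (e1 q * e1 q)));
        [intros q _; rewrite sqdiff_comp_sub, sqsum_comp_sub; field | flat_lin d].
    - apply (flat_eq_near0 d Hd) with (fun q => / 4 *
          ((sqsum (t q) - sqsum q) - (sqdiff (t q) - sqdiff q) - 2 * (e2 q * e2 q)));
        [intros q _; rewrite sqdiff_comp_sub, sqsum_comp_sub; field | flat_lin d]. }
  intros k. destruct (Step k) as [K1 K2]. split; apply flat_le with (k + 2)%nat; auto; lia.
Qed.

End NearIdentity.

(** * Normal forms and charts *)

Definition nf_gen (a : R) (b c : R * R -> R) : map3 :=
  fun i p => match i with
             | 0%nat => sqdiff p
             | 1%nat => a * sqsum p + b p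
             | _ => c p
             end.

Definition cubic_part (p1 : R -> R) (p2 : R * R -> R) (p3 : R -> R) : R * R -> R :=
  fun p => fst p ^ 3 * p1 (fst p) + fst p ^ 2 * snd p ^ 2 * p2 p + snd p ^ 3 * p3 (snd p).

Lemma nf_nf_gen a b1 b2 b3 c1 c2 c3 :
  nf a b1 b2 b3 c1 c2 c3 = nf_gen a (cubic_part b1 b2 b3) (cubic_part c1 c2 c3).
Proof. reflexivity. Qed.

(** The normal form data [(a, b, c)] on the box of radius [e], with 3-jets
    [b = g1 u^3 + g3 v^3] and [c = k1 u^3 + k3 v^3] at the origin. *)
Definition nf_on (e a : R) (b c : R * R -> R) (g1 g3 k1 k3 : R) : Prop :=
  0 < a /\ 0 < k1 /\ 0 < k3 /\ smooth_on e b /\ smooth_on e c /\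
  flat 4 (fun p => b p - cube_axes g1 g3 p) /\ flat 4 (fun p => c p - cube_axes k1 k3 p).

Lemma nf_on_le e e' a b c g1 g3 k1 k3 : e' <= e -> nf_on e a b c g1 g3 k1 k3 -> nf_on e' a b c g1 g3 k1 k3.
Proof.
  intros He (Ha & Hk1 & Hk3 & Sb & Sc & Ib & Ic).
  refine (conj Ha (conj Hk1 (conj Hk3 (conj _ (conj _ (conj Ib Ic)))))); apply (smooth_on_le e); auto.
Qed.

Lemma cubic_part_smooth_flat p1 p2 p3 : smooth1 p1 -> smooth2 p2 -> smooth1 p3 ->
  exists e, 0 < e /\ smooth_on e (cubic_part p1 p2 p3) /\
    flat 4 (fun p => cubic_part p1 p2 p3 p - cube_axes (p1 0) (p3 0) p).
Proof.
  intros H1 [e2 [He2 S2]] H3.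
  destruct (smooth1_smooth_on_fst p1 H1) as [e1 [He1 S1]].
  destruct (smooth1_smooth_on_snd p3 H3) as [e3 [He3 S3]].
  set (e := Rmin e1 (Rmin e2 e3)).
  assert (He : 0 < e) by (repeat apply Rmin_pos; auto).
  apply (smooth_on_le _ e) in S1; [| apply Rmin_l].
  apply (smooth_on_le _ e) in S2; [| eapply Rle_trans; [apply Rmin_r | apply Rmin_l]].
  apply (smooth_on_le _ e) in S3; [| eapply Rle_trans; [apply Rmin_r | apply Rmin_r]].
  exists e. split; [exact He | split; [unfold cubic_part; smooth |]].
  assert (Ic1 : flat 1 (fun p => p1 (fst p) - p1 0)) by (apply flat_S; [simpl; ring | intros; apply flat_0]).
  assert (Ic3 : flat 1 (fun p => p3 (snd p) - p3 0)) by (apply flat_S; [simpl; ring | intros; apply flat_0]).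
  assert (Iuv : flat 4 (fun p => fst p ^ 2 * snd p ^ 2))
    by (apply (flat_mult e He 4 _ _ 2 2); try smooth; auto using flat_fst_pow, flat_snd_pow).
  apply (flat_eq_near0 e He) with (fun p => fst p ^ 3 * (p1 (fst p) - p1 0) + fst p ^ 2 * snd p ^ 2 * p2 p
                                            + snd p ^ 3 * (p3 (snd p) - p3 0));
    [intros q _; unfold cubic_part, cube_axes; ring |].
  apply (flat_plus e He); [smooth .. | apply (flat_plus e He); [smooth .. | |] |].
  - apply (flat_mult e He 4 _ _ 3 1); try smooth; auto using flat_fst_pow.
  - apply (flat_mult e He 4 _ _ 4 0); try smooth; auto using flat_0.
  - apply (flat_mult e He 4 _ _ 3 1); try smooth; auto using flat_snd_pow.
Qed.

Lemma nf_data_nf_on a b1 b2 b3 c1 c2 c3 : nf_data a b1 b2 b3 c1 c2 c3 ->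
  exists e, 0 < e /\ nf_on e a (cubic_part b1 b2 b3) (cubic_part c1 c2 c3) (b1 0) (b3 0) (c1 0) (c3 0).
Proof.
  intros (Sb1 & Sb3 & Sc1 & Sc3 & Sb2 & Sc2 & Ha & Hc1 & Hc3).
  destruct (cubic_part_smooth_flat b1 b2 b3 Sb1 Sb2 Sb3) as [eb [Heb [Sb Ib]]].
  destruct (cubic_part_smooth_flat c1 c2 c3 Sc1 Sc2 Sc3) as [ec [Hec [Sc Ic]]].
  exists (Rmin eb ec). split; [apply Rmin_pos; auto |].
  refine (conj Ha (conj Hc1 (conj Hc3 (conj _ (conj _ (conj Ib Ic)))))).
  - apply (smooth_on_le eb); [apply Rmin_l | exact Sb].
  - apply (smooth_on_le ec); [apply Rmin_r | exact Sc].
Qed.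

Lemma flat_S_sub_jet_eq d r G H : 0 < d -> smooth_on d G -> smooth_on d H ->
  flat (S r) (fun q => G q - H q) <-> jet_eq r G H.
Proof.
  intros Hd SG SH. split; intros J ds Hl.
  - pose proof (J ds ltac:(lia)) as K.
    rewrite (pDs_minus d G H SG SH ds (0, 0) (near0_origin d Hd)) in K. lra.
  - rewrite (pDs_minus d G H SG SH ds (0, 0) (near0_origin d Hd)), J by lia. ring.
Qed.

Definition jac0 (t : R * R -> R * R) : R :=
  pD true (tfst t) (0, 0) * pD false (tsnd t) (0, 0) - pD false (tfst t) (0, 0) * pD true (tsnd t) (0, 0).

Definition inverse_chart (d e : R) (s t : R * R -> R * R) : Prop :=
  0 < d /\ d <= e /\ smooth_on e (tfst s) /\ smooth_on e (tsnd s) /\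
  smooth_on d (tfst t) /\ smooth_on d (tsnd t) /\
  maps_into d e t /\ maps_into d e (lin_part t) /\
  s (0, 0) = (0, 0) /\ t (0, 0) = (0, 0) /\ forall q, near0 d q -> s (t q) = q.

Lemma maps_into_le d d' e t : d' <= d -> maps_into d e t -> maps_into d' e t.
Proof. intros H Ht q Hq. apply Ht, (near0_le d'); auto. Qed.

Lemma continuous_maps_into t e : 0 < e -> t (0, 0) = (0, 0) ->
  continuous (tfst t) (0, 0) -> continuous (tsnd t) (0, 0) -> exists d, 0 < d /\ maps_into d e t.
Proof.
  intros He Ht0 C1 C2.
  assert (L : forall h : R * R -> R, continuous h (0, 0) -> h (0, 0) = 0 ->
             exists del, 0 < del /\ forall q, near0 del q -> Rabs (h q) < e).
  { intros h Hc H0.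
    assert (N : locally (h (0, 0)) (fun y : R => Rabs y < e)).
    { exists (mkposreal e He). intros y Hy. apply ball_Rabs in Hy. rewrite H0, Rminus_0_r in Hy. exact Hy. }
    destruct (Hc _ N) as [eps Heps]. exists eps. split; [apply cond_pos |].
    intros [x y] [Hx Hy]. apply Heps. split; apply Rabs_ball; rewrite Rminus_0_r; assumption. }
  destruct (L _ C1) as [d1 [Hd1 D1]]; [unfold tfst; rewrite Ht0; reflexivity |].
  destruct (L _ C2) as [d2 [Hd2 D2]]; [unfold tsnd; rewrite Ht0; reflexivity |].
  exists (Rmin d1 d2). split; [apply Rmin_pos; auto |].
  intros q Hq. split.
  - apply D1, (near0_le (Rmin d1 d2)); [apply Rmin_l | exact Hq].
  - apply D2, (near0_le (Rmin d1 d2)); [apply Rmin_r | exact Hq].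
Qed.

Ltac Rmin_le := first [ apply Rle_refl
  | eapply Rle_trans; [apply Rmin_l | Rmin_le]
  | eapply Rle_trans; [apply Rmin_r | Rmin_le] ].

Lemma diffeo_germ_inverse_chart s t e0 : diffeo_germ s t -> 0 < e0 ->
  exists d e, e <= e0 /\ inverse_chart d e s t.
Proof.
  intros (Hs0 & [es1 [Hes1 Ss1]] & [es2 [Hes2 Ss2]] & [et1 [Het1 St1]] & [et2 [Het2 St2]] & [eps0 [Heps0 Hinv]]) He0.
  change (smooth_on es1 (tfst s)) in Ss1. change (smooth_on es2 (tsnd s)) in Ss2.
  change (smooth_on et1 (tfst t)) in St1. change (smooth_on et2 (tsnd t)) in St2.
  set (e := Rmin e0 (Rmin es1 es2)).
  assert (He : 0 < e) by (repeat apply Rmin_pos; auto).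
  assert (Ht0 : t (0, 0) = (0, 0)).
  { destruct (Hinv (0, 0) (near0_origin eps0 Heps0)) as [E _]. rewrite Hs0 in E. exact E. }
  destruct (continuous_maps_into t e He Ht0 (proj2 (proj2 (St1 nil (0, 0) (near0_origin et1 Het1))))
              (proj2 (proj2 (St2 nil (0, 0) (near0_origin et2 Het2))))) as [dt [Hdt Mt]].
  set (N := 1 + Rabs (pD true (tfst t) (0, 0)) + Rabs (pD false (tfst t) (0, 0))
              + Rabs (pD true (tsnd t) (0, 0)) + Rabs (pD false (tsnd t) (0, 0))).
  assert (HN : 1 <= N).
  { unfold N. pose proof (Rabs_pos (pD true (tfst t) (0, 0))). pose proof (Rabs_pos (pD false (tfst t) (0, 0))).
    pose proof (Rabs_pos (pD true (tsnd t) (0, 0))). pose proof (Rabs_pos (pD false (tsnd t) (0, 0))). lra. }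
  assert (HeN : 0 < e / N) by (apply Rdiv_lt_0_compat; lra).
  set (d := Rmin (Rmin (Rmin et1 et2) (Rmin eps0 dt)) (e / N)).
  assert (Hd : 0 < d) by (repeat apply Rmin_pos; auto).
  assert (dN : d * N <= e).
  { assert (d <= e / N) by (unfold d; Rmin_le).
    apply Rmult_le_compat_r with (r := N) in H; [| lra].
    unfold Rdiv in H. rewrite Rmult_assoc, Rinv_l in H; lra. }
  exists d, e. split; [unfold e; Rmin_le |].
  refine (conj Hd (conj _ (conj _ (conj _ (conj _ (conj _ (conj _ (conj _ (conj Hs0 (conj Ht0 _)))))))))).
  - nra.
  - apply (smooth_on_le es1); [unfold e; Rmin_le | exact Ss1].
  - apply (smooth_on_le es2); [unfold e; Rmin_le | exact Ss2].
  - apply (smooth_on_le et1); [unfold d; Rmin_le | exact St1].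
  - apply (smooth_on_le et2); [unfold d; Rmin_le | exact St2].
  - apply (maps_into_le dt); [unfold d; Rmin_le | exact Mt].
  - apply linmap_maps_into; auto.
  - intros q Hq. apply Hinv, (near0_le d); [unfold d; Rmin_le | exact Hq].
Qed.

Lemma inverse_chart_jac0 d e s t : inverse_chart d e s t -> jac0 s * jac0 t = 1.
Proof.
  intros (Hd & _ & Ss1 & Ss2 & St1 & St2 & Mt & _ & _ & Ht0 & Hinv).
  assert (Z := near0_origin d Hd).
  assert (Chain : forall (g h : R * R -> R) b, smooth_on e g -> eq_near0 d (fun q => g (t q)) h ->
            pD b h (0, 0) = pD true g (0, 0) * pD b (tfst t) (0, 0) + pD false g (0, 0) * pD b (tsnd t) (0, 0)).
  { intros g h b Sg Hgh. rewrite <- (pD_eq_near0 d b _ _ Hgh (0, 0) Z).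
    rewrite (pD_comp d e t Mt g (0, 0) b Sg Z St1 St2), Ht0. reflexivity. }
  assert (F : eq_near0 d (fun q => tfst s (t q)) fst) by (intros q Hq; unfold tfst; rewrite Hinv; auto).
  assert (G : eq_near0 d (fun q => tsnd s (t q)) snd) by (intros q Hq; unfold tsnd; rewrite Hinv; auto).
  pose proof (Chain _ _ true Ss1 F) as O1. pose proof (Chain _ _ false Ss1 F) as O2.
  pose proof (Chain _ _ true Ss2 G) as O3. pose proof (Chain _ _ false Ss2 G) as O4.
  rewrite pD_fst_true in O1. rewrite pD_fst_false in O2. rewrite pD_snd_true in O3. rewrite pD_snd_false in O4.
  unfold jac0.
  set (P := pD true (tfst t) (0, 0)) in *. set (Q := pD false (tfst t) (0, 0)) in *.
  set (R' := pD true (tsnd t) (0, 0)) in *. set (S := pD false (tsnd t) (0, 0)) in *.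
  set (al := pD true (tfst s) (0, 0)) in *. set (be := pD false (tfst s) (0, 0)) in *.
  set (ga := pD true (tsnd s) (0, 0)) in *. set (de := pD false (tsnd s) (0, 0)) in *.
  transitivity ((al * P + be * R') * (ga * Q + de * S) - (al * Q + be * S) * (ga * P + de * R')); [ring|].
  rewrite <- O1, <- O2, <- O3, <- O4. ring.
Qed.

Lemma mact_is_id3 A F i p : is_id3 A -> (i < 3)%nat -> mact A F i p = F i p.
Proof.
  intros HA Hi. unfold mact. rewrite !HA by lia. unfold kron.
  destruct i as [|[|[|i]]]; try lia; simpl; ring.
Qed.

Lemma smooth_on_nf_gen e a b c i : smooth_on e b -> smooth_on e c -> smooth_on e (nf_gen a b c i).
Proof.
  intros Sb Sc. assert (Ss := smooth_on_sqsum e).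
  destruct i as [|[|i]]; simpl; [apply smooth_on_sqdiff | | exact Sc].
  exact (smooth_on_plus e _ _ (smooth_on_scal e a _ Ss) Sb).
Qed.

Section JetRigidity.

Variables (d ef : R) (t : R * R -> R * R) (A : mat3).
Hypotheses (Hd : 0 < d) (Hdef : d <= ef) (Ht : maps_into d ef t) (Ht1 : smooth_on d (tfst t))
  (Ht2 : smooth_on d (tsnd t)) (Ht0 : t (0, 0) = (0, 0)) (HL : maps_into d ef (lin_part t))
  (Hjac : 0 < jac0 t) (HA : SO3 A).

Variables (a ah : R) (b c bh ch : R * R -> R) (g1 g3 k1 k3 h1 h3 m1 m3 : R).
Hypotheses (Hf : nf_on ef a b c g1 g3 k1 k3) (Hfh : nf_on ef ah bh ch h1 h3 m1 m3)
  (Hrows : forall i, (i < 3)%nat ->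
     flat 4 (fun q => mact A (nf_gen a b c) i (t q) - nf_gen ah bh ch i q)).

Let P := pD true (tfst t) (0, 0).
Let Q := pD false (tfst t) (0, 0).
Let R_ := pD true (tsnd t) (0, 0).
Let S := pD false (tsnd t) (0, 0).

Lemma jet3_rigidity_linear : is_id3 A /\ a = ah /\ k1 = m1 /\ k3 = m3 /\ P = 1 /\ Q = 0 /\ R_ = 0 /\ S = 1.
Proof.
  destruct Hf as (Ha & Hk1 & Hk3 & Sb & Sc & Ib & Ic).
  destruct Hfh as (Hah & Hm1 & Hm3 & Sbh & Sch & Ibh & Ich).
  assert (Hef : 0 < ef) by lra.
  assert (Sbh' : smooth_on d bh) by (apply (smooth_on_le ef); auto).
  assert (Sch' : smooth_on d ch) by (apply (smooth_on_le ef); auto).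
  assert (Ib3 := flat3_of_flat4_sub_cube ef b g1 g3 Hef Sb Ib).
  assert (Ic3 := flat3_of_flat4_sub_cube ef c k1 k3 Hef Sc Ic).
  assert (Row : forall i Tu Tv, (i < 3)%nat ->
            flat 3 (fun q => nf_gen ah bh ch i q - (Tu * fst q ^ 2 + Tv * snd q ^ 2)) ->
            quad_pullback (A i 0%nat) (A i 1%nat * a) P Q R_ S Tu Tv).
  { intros i Tu Tv Hi IF.
    apply (quadratic_row d ef t) with b c (nf_gen ah bh ch i) (A i 2%nat); auto.
    - apply smooth_on_nf_gen; auto.
    - apply (flat_le 4); [exact (Hrows i Hi) | lia]. }
  destruct (quadratic_terms_rigidity A a ah P Q R_ S Ha Hah Hjac HA
    (Row 0%nat 1 (-1) ltac:(lia) ltac:(apply (flat_zero_near0 d Hd); intros q _; simpl; unfold sqdiff; ring))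
    (Row 1%nat ah ah ltac:(lia) ltac:(apply (flat_eq_near0 d Hd) with bh;
                                       [intros q _; simpl; unfold sqsum; ring | apply (flat3_of_flat4_sub_cube d bh h1 h3); auto]))
    (Row 2%nat 0 0 ltac:(lia) ltac:(apply (flat_eq_near0 d Hd) with ch;
                                     [intros q _; simpl; ring | apply (flat3_of_flat4_sub_cube d ch m1 m3); auto])))
    as [Haa [A20 [A21 Hcase]]].
  assert (Ic2 : flat 4 (fun q => A 2%nat 2%nat * c (t q) - ch q)).
  { apply (flat_eq_near0 d Hd) with (fun q => mact A (nf_gen a b c) 2%nat (t q) - nf_gen ah bh ch 2%nat q);
      [intros q _; unfold mact; simpl; rewrite A20, A21; ring | apply Hrows; lia]. }
  destruct (cubic_row d ef t Hd Ht Ht1 Ht2 Ht0 HL c ch (A 2%nat 2%nat) k1 k3 m1 m3 Sc Sch' Ic Ich Ic2) as [C1 C3].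
  fold P Q R_ S in C1, C3.
  destruct (cubic_terms_rigidity (A 2%nat 2%nat) P Q R_ S k1 k3 m1 m3 Hk1 Hk3 Hm1 Hm3 C1 C3)
    as (HP & HQ & HR & HS & K1 & K3).
  { destruct Hcase as [(Hid & Hdiag) | Hanti]; [left | right; exact Hanti].
    split; [rewrite Hid by lia; reflexivity | exact Hdiag]. }
  destruct Hcase as [(Hid & _) | (_ & HP0 & _)]; [repeat split; auto | lra].
Qed.

Lemma jet3_rigidity : is_id3 A /\ a = ah /\ g1 = h1 /\ g3 = h3 /\ k1 = m1 /\ k3 = m3 /\
  flat 2 (fun q => tfst t q - fst q) /\ flat 2 (fun q => tsnd t q - snd q).
Proof.
  destruct jet3_rigidity_linear as (Hid & Haa & K1 & K3 & HP & HQ & HR & HS).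
  destruct Hf as (Ha & _ & _ & Sb & _ & Ib & _). destruct Hfh as (_ & _ & _ & Sbh & _ & Ibh & _).
  assert (J1 : flat 2 (fun q => tfst t q - fst q)).
  { apply (flat_eq_near0 d Hd) with (fun q => tfst t q - (P * fst q + Q * snd q));
      [intros q _; rewrite HP, HQ; ring |].
    apply (flat_sub_linear_part d); auto. unfold tfst; rewrite Ht0; reflexivity. }
  assert (J2 : flat 2 (fun q => tsnd t q - snd q)).
  { apply (flat_eq_near0 d Hd) with (fun q => tsnd t q - (R_ * fst q + S * snd q));
      [intros q _; rewrite HR, HS; ring |].
    apply (flat_sub_linear_part d); auto. unfold tsnd; rewrite Ht0; reflexivity. }
  assert (Row : forall i, (i < 3)%nat -> flat 4 (fun q => nf_gen a b c i (t q) - nf_gen ah bh ch i q)).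
  { intros i Hi. apply (flat_eq_near0 d Hd) with (fun q => mact A (nf_gen a b c) i (t q) - nf_gen ah bh ch i q);
      [intros q _; rewrite mact_is_id3; auto | apply Hrows, Hi]. }
  subst ah.
  destruct (cubic_row_b d ef t Hd Hdef Ht Ht1 Ht2 Ht0 a b bh g1 g3 h1 h3 Sb
              Sbh Ib Ibh J1 J2 (Row 0%nat ltac:(lia)) (Row 1%nat ltac:(lia)))
    as [G1 G3].
  repeat split; auto.
Qed.

End JetRigidity.

Lemma smooth_on_mact e A F i : (forall j, smooth_on e (F j)) -> smooth_on e (mact A F i).
Proof.
  intros SF. assert (S0 := SF 0%nat). assert (S1 := SF 1%nat). assert (S2 := SF 2%nat).
  unfold mact. smooth.
Qed.

Lemma inverse_chart_jac0_pos d e s t : inverse_chart d e s t -> 0 < jac0 s -> 0 < jac0 t.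
Proof. intros Hc Hs. pose proof (inverse_chart_jac0 d e s t Hc). nra. Qed.

Lemma nf_jet3_rigidity d e s t A a b c g1 g3 k1 k3 ah bh ch h1 h3 m1 m3 :
  inverse_chart d e s t -> 0 < jac0 s -> SO3 A ->
  nf_on e a b c g1 g3 k1 k3 -> nf_on e ah bh ch h1 h3 m1 m3 ->
  jet_eq3 3 (comp3 (mact A (nf_gen a b c)) t) (nf_gen ah bh ch) ->
  a = ah /\ g1 = h1 /\ g3 = h3 /\ k1 = m1 /\ k3 = m3 /\ jet_eq3 3 (nf_gen a b c) (nf_gen ah bh ch).
Proof.
  intros Hc Hs HA Hf Hfh Hjet.
  assert (Hjac := inverse_chart_jac0_pos d e s t Hc Hs).
  destruct Hc as (Hd & Hde & _ & _ & St1 & St2 & Mt & ML & _ & Ht0 & _).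
  assert (Sf := Hf). destruct Sf as (_ & _ & _ & Sb & Sc & Ib & Ic).
  assert (Sfh := Hfh). destruct Sfh as (_ & _ & _ & Sbh & Sch & Ibh & Ich).
  assert (Sd : forall x y z, smooth_on e y -> smooth_on e z -> forall i, smooth_on d (nf_gen x y z i)).
  { intros x y z Sy Sz i. apply (smooth_on_le e); auto. apply smooth_on_nf_gen; auto. }
  destruct (jet3_rigidity d e t A Hd Hde Mt St1 St2 Ht0 ML Hjac HA a ah b c bh ch g1 g3 k1 k3 h1 h3 m1 m3 Hf Hfh)
    as (_ & Haa & G1 & G3 & K1 & K3 & _).
  { intros i Hi. apply (flat_S_sub_jet_eq d); auto; [| apply Hjet, Hi].
    apply (smooth_on_comp d e); auto. apply smooth_on_mact. intros; apply smooth_on_nf_gen; auto. }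
  subst ah h1 h3 m1 m3. repeat split; auto.
  intros i Hi. apply (flat_S_sub_jet_eq d); auto.
  assert (Hsub : forall y z x1 x3, flat 4 (fun p => y p - cube_axes x1 x3 p) ->
            flat 4 (fun p => z p - cube_axes x1 x3 p) -> smooth_on e y -> smooth_on e z ->
            flat 4 (fun p => y p - z p)).
  { intros y z x1 x3 Iy Iz Sy Sz.
    assert (Sx : smooth_on e (cube_axes x1 x3)) by apply smooth_on_cube_axes.
    apply (flat_eq_near0 e (Rlt_le_trans _ _ _ Hd Hde))
      with (fun p => (y p - cube_axes x1 x3 p) - (z p - cube_axes x1 x3 p)); [intros p _; ring |].
    apply (flat_minus e (Rlt_le_trans _ _ _ Hd Hde)); auto; smooth. }
  destruct i as [|[|[|i]]]; try lia; simpl.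
  - apply (flat_zero_near0 d Hd). intros p _. ring.
  - apply (flat_eq_near0 d Hd) with (fun p => b p - bh p); [intros p _; ring | apply Hsub with g1 g3; auto].
  - apply Hsub with k1 k3; auto.
Qed.

Lemma flat_inverse_sub_id d e s t : inverse_chart d e s t ->
  (forall k, flat k (fun q => tfst t q - fst q) /\ flat k (fun q => tsnd t q - snd q)) ->
  forall k, flat k (fun q => tfst s q - fst q) /\ flat k (fun q => tsnd s q - snd q).
Proof.
  intros (Hd & Hde & Ss1 & Ss2 & St1 & St2 & Mt & _ & Hs0 & Ht0 & Hinv) Hall k.
  destruct (Hall (S k)) as [K1 K2].
  assert (Inv : forall (g : R * R -> R) (h : R * R -> R), smooth_on e g -> g (0, 0) = 0 ->
            smooth_on d h -> eq_near0 d (fun q => g (t q)) h -> flat k (fun q => g q - h q)).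
  { intros g h Sg Hg0 Sh Hgh.
    assert (Sgd : smooth_on d g) by (apply (smooth_on_le e); auto).
    assert (Sgt : smooth_on d (fun q => g (t q))) by (apply (smooth_on_comp d e); auto).
    apply (flat_eq_near0 d Hd) with (fun q => (g (t q) - h q) - (g (t q) - g q)).
    - intros q Hq. rewrite (Hgh q Hq). ring.
    - apply (flat_minus d Hd); try smooth.
      + apply (flat_zero_near0 d Hd). intros q Hq. rewrite (Hgh q Hq). ring.
      + apply (flat_comp_id_sub d e t Hd Hde Mt St1 St2 Ht0 (S k) k g 1); auto; try lia.
        apply flat_S; [exact Hg0 | intros; apply flat_0]. }
  split; apply Inv; auto; try (unfold tfst, tsnd; rewrite Hs0; reflexivity); try smooth;
    intros q Hq; unfold tfst, tsnd; rewrite Hinv; auto.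
Qed.

Lemma nf_germ_rigidity d e s t A a b c g1 g3 k1 k3 :
  inverse_chart d e s t -> 0 < jac0 s -> SO3 A -> nf_on e a b c g1 g3 k1 k3 ->
  germ_eq3 (comp3 (mact A (nf_gen a b c)) t) (nf_gen a b c) ->
  is_id3 A /\ forall r, jet_eq r (tfst s) fst /\ jet_eq r (tsnd s) snd.
Proof.
  intros Hc Hs HA Hf Hgerm.
  assert (Hjac := inverse_chart_jac0_pos d e s t Hc Hs).
  assert (Hc' := Hc). destruct Hc' as (Hd & Hde & Ss1 & Ss2 & St1 & St2 & Mt & ML & _ & Ht0 & _).
  assert (Sf := Hf). destruct Sf as (Ha & _ & _ & Sb & _ & Ib & _).
  assert (Hrows : forall k i, (i < 3)%nat -> flat k (fun q => mact A (nf_gen a b c) i (t q) - nf_gen a b c i q)).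
  { intros k i Hi. destruct (Hgerm i Hi) as [eg [Heg Hg]].
    apply (flat_zero_near0 eg Heg). intros q Hq. specialize (Hg q Hq). unfold comp3 in Hg. lra. }
  destruct (jet3_rigidity d e t A Hd Hde Mt St1 St2 Ht0 ML Hjac HA a a b c b c g1 g3 k1 k3 g1 g3 k1 k3
              Hf Hf (Hrows 4%nat)) as (Hid & _ & _ & _ & _ & _ & J1 & J2).
  split; [exact Hid |]. intros r.
  assert (Row : forall k i, (i < 3)%nat -> flat k (fun q => nf_gen a b c i (t q) - nf_gen a b c i q)).
  { intros k i Hi. apply (flat_eq_near0 d Hd) with (fun q => mact A (nf_gen a b c) i (t q) - nf_gen a b c i q);
      [intros q _; rewrite mact_is_id3; auto | apply Hrows, Hi]. }
  assert (Hall := flat_sub_id_all d e t Hd Hde Mt St1 St2 Ht0 a b Ha Sb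
                    (flat3_of_flat4_sub_cube e b g1 g3 (Rlt_le_trans _ _ _ Hd Hde) Sb Ib) J1 J2
                    (fun k => Row k 0%nat ltac:(lia)) (fun k => Row k 1%nat ltac:(lia))).
  destruct (flat_inverse_sub_id d e s t Hc Hall (S r)) as [K1 K2].
  split; apply (flat_S_sub_jet_eq d); auto; try smooth; apply (smooth_on_le e); auto.
Qed.

Theorem theorem2 :
  forall (a : R) (b1 : R -> R) (b2 : R * R -> R) (b3 : R -> R)
         (c1 : R -> R) (c2 : R * R -> R) (c3 : R -> R)
         (ha : R) (hb1 : R -> R) (hb2 : R * R -> R) (hb3 : R -> R)
         (hc1 : R -> R) (hc2 : R * R -> R) (hc3 : R -> R)
         (s t : R * R -> R * R) (A : mat3),
    nf_data a b1 b2 b3 c1 c2 c3 ->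
    nf_data ha hb1 hb2 hb3 hc1 hc2 hc3 ->
    diffeo_germ s t ->
    orientation_preserving s ->
    SO3 A ->
    (* (i) *)
    (jet_eq3 3 (comp3 (mact A (nf a b1 b2 b3 c1 c2 c3)) t)
               (nf ha hb1 hb2 hb3 hc1 hc2 hc3) ->
       a = ha /\ b1 0 = hb1 0 /\ b3 0 = hb3 0 /\ c1 0 = hc1 0 /\ c3 0 = hc3 0 /\
       jet_eq3 3 (nf a b1 b2 b3 c1 c2 c3) (nf ha hb1 hb2 hb3 hc1 hc2 hc3))
    /\
    (* (ii) *)
    (germ_eq3 (comp3 (mact A (nf a b1 b2 b3 c1 c2 c3)) t) (nf a b1 b2 b3 c1 c2 c3) ->
       is_id3 A /\
       forall r : nat, (1 <= r)%nat ->
         jet_eq r (fun p => fst (s p)) fst /\ jet_eq r (fun p => snd (s p)) snd).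
Proof.
  intros a b1 b2 b3 c1 c2 c3 ha hb1 hb2 hb3 hc1 hc2 hc3 s t A Hf Hfh Hs Hor HA.
  rewrite !nf_nf_gen.
  destruct (nf_data_nf_on _ _ _ _ _ _ _ Hf) as [e1 [He1 Nf]].
  destruct (nf_data_nf_on _ _ _ _ _ _ _ Hfh) as [e2 [He2 Nfh]].
  destruct (diffeo_germ_inverse_chart s t (Rmin e1 e2) Hs (Rmin_pos _ _ He1 He2)) as (d & e & He & Hc).
  apply (nf_on_le e1 e) in Nf; [| eapply Rle_trans; [exact He | apply Rmin_l]].
  apply (nf_on_le e2 e) in Nfh; [| eapply Rle_trans; [exact He | apply Rmin_r]].
  split.
  - intros Hjet. exact (nf_jet3_rigidity d e s t A _ _ _ _ _ _ _ _ _ _ _ _ _ _ Hc Hor HA Nf Nfh Hjet).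
  - intros Hgerm. destruct (nf_germ_rigidity d e s t A _ _ _ _ _ _ _ Hc Hor HA Nf Hgerm) as [Hid Hjet].
    split; [exact Hid | intros r _; apply Hjet].
Qed.
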